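(* For every finite set $P\subset\mathbb{R}^2$ in general position, there exists a threshold $\alpha_0\in(0,\pi)$ such that for every $\alpha\in(\alpha_0,\pi)$ we have $M_a(P,\alpha)=M_b(P,\alpha)=M(P)$ and $M_a^\|(P,\alpha)=M_b^\|(P,\alpha)=2M(P)$.
   Context: General position means no three points are collinear. $M(P)$ denotes the maximum number of edges of a planar straight-line graph with vertex set $P$ (edges are pairwise noncrossing straight-line segments). For $\alpha\in(0,\pi)$, an $\alpha$-bend edge between points $a$ and $c$ is a polyline $(a,b,c)$ with a single bend point $b$ (not on the line $ac$) such that the interior angle of the triangle $abc$ at $b$ equals $\alpha$. An $\alpha$-arc edge between $a$ and $c$ is a circular arc with endpoints $a$ and $c$ and central angle $2(\pi-\alpha)$. An $\alpha$-bend graph (resp. $\alpha$-arc graph) is a simple graph embedded in the plane (vertices are distinct points; edges pairwise do not cross, meet only at common endpoints, and contain no vertex in their relative interior) in which every edge is an $\alpha$-bend (resp. $\alpha$-arc) edge; an $\alpha$-bend (resp. $\alpha$-arc) multigraph is defined the same way except that parallel edges are allowed. $M_a(P,\alpha)$, $M_b(P,\alpha)$, $M_a^\|(P,\alpha)$, $M_b^\|(P,\alpha)$ denote the maximum number of edges of an $\alpha$-arc graph, an $\alpha$-bend graph, an $\alpha$-arc multigraph, and an $\alpha$-bend multigraph, respectively, with vertex set $P$. *)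

From Stdlib Require Import Reals Lra List.
Open Scope R_scope.

Definition pt := (R * R)%type.

Definition padd (p q : pt) : pt := (fst p + fst q, snd p + snd q).
Definition psub (p q : pt) : pt := (fst p - fst q, snd p - snd q).
Definition pscale (t : R) (p : pt) : pt := (t * fst p, t * snd p).
Definition dot (u v : pt) : R := fst u * fst v + snd u * snd v.
Definition cross (u v : pt) : R := fst u * snd v - snd u * fst v.
Definition pnorm (u : pt) : R := sqrt (dot u u).

Definition collinear (p q r : pt) : Prop := cross (psub q p) (psub r p) = 0.

Definition general_position (P : list pt) : Prop :=
  forall p q r, In p P -> In q P -> In r P ->
    p <> q -> q <> r -> p <> r -> ~ collinear p q r.

Definition angle_at (a b c : pt) : R :=
  acos (dot (psub a b) (psub c b) / (pnorm (psub a b) * pnorm (psub c b))).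

Definition seg (p q : pt) (x : pt) : Prop :=
  exists t, 0 <= t <= 1 /\ x = padd p (pscale t (psub q p)).

Definition rot (t : R) (u : pt) : pt :=
  (cos t * fst u - sin t * snd u, sin t * fst u + cos t * snd u).

Record edge := mkEdge { e_src : pt; e_dst : pt; e_curve : pt -> Prop }.

Definition straight_edge (e : edge) : Prop :=
  e_src e <> e_dst e /\ forall x, e_curve e x <-> seg (e_src e) (e_dst e) x.

Definition bend_edge (alpha : R) (e : edge) : Prop :=
  exists b, ~ collinear (e_src e) b (e_dst e) /\
    angle_at (e_src e) b (e_dst e) = alpha /\
    forall x, e_curve e x <-> (seg (e_src e) b x \/ seg b (e_dst e) x).

(* alpha-arc edge: circular arc from a to c with center o and central angle
   2(pi - alpha), traversed counterclockwise (s = 1) or clockwise (s = -1) *)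
Definition arc_edge (alpha : R) (e : edge) : Prop :=
  e_src e <> e_dst e /\
  exists (o : pt) (s : R), (s = 1 \/ s = -1) /\
    e_dst e = padd o (rot (s * (2 * (PI - alpha))) (psub (e_src e) o)) /\
    forall x, e_curve e x <->
      exists t, 0 <= t <= 2 * (PI - alpha) /\
        x = padd o (rot (s * t) (psub (e_src e) o)).

Definition same_endpoints (e f : edge) : Prop :=
  (e_src e = e_src f /\ e_dst e = e_dst f) \/
  (e_src e = e_dst f /\ e_dst e = e_src f).

Definition is_endpoint (e : edge) (x : pt) : Prop := x = e_src e \/ x = e_dst e.

Definition dummy_edge : edge := mkEdge (0,0) (0,0) (fun _ => False).

Definition embedded_graph (edge_ok : edge -> Prop) (simple : bool)
    (P : list pt) (G : list edge) : Prop :=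
  NoDup P /\
  (forall e, In e G -> In (e_src e) P /\ In (e_dst e) P /\ edge_ok e) /\
  (forall e v, In e G -> In v P -> e_curve e v -> is_endpoint e v) /\
  (forall i j, (i < length G)%nat -> (j < length G)%nat -> i <> j ->
     let e := nth i G dummy_edge in let f := nth j G dummy_edge in
     (forall x, e_curve e x -> e_curve f x -> is_endpoint e x /\ is_endpoint f x) /\
     (simple = true -> ~ same_endpoints e f)).

Definition is_max_edges (Valid : list edge -> Prop) (m : nat) : Prop :=
  (exists G, Valid G /\ length G = m) /\ (forall G, Valid G -> (length G <= m)%nat).

Definition M_is (P : list pt) (m : nat) : Prop :=
  is_max_edges (embedded_graph straight_edge true P) m.
Definition Ma_is (P : list pt) (alpha : R) (m : nat) : Prop :=
  is_max_edges (embedded_graph (arc_edge alpha) true P) m.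
Definition Mb_is (P : list pt) (alpha : R) (m : nat) : Prop :=
  is_max_edges (embedded_graph (bend_edge alpha) true P) m.
Definition Ma_multi_is (P : list pt) (alpha : R) (m : nat) : Prop :=
  is_max_edges (embedded_graph (arc_edge alpha) false P) m.
Definition Mb_multi_is (P : list pt) (alpha : R) (m : nat) : Prop :=
  is_max_edges (embedded_graph (bend_edge alpha) false P) m.

From Stdlib Require Import Reals Lra Psatz List Ranalysis5 Classical ClassicalEpsilon Lia.
Open Scope R_scope.

(* Write [th = PI - alpha] and [k = tan th].  As [alpha -> PI], every [alpha]-arc or [alpha]-bend
   edge stays inside the thin rhombus ("diamond") of opening [k] spanned by its endpoints, and for
   a point set in general position these diamonds behave like the segments: no diamond contains a
   third point, diamonds of disjoint segments are disjoint, and the diamond of a segment meets a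
   crossing segment only in its interior.  An intermediate value argument then shows that two
   such edges cross whenever their chords cross, so straightening a noncrossing arc or bend graph
   yields a plane straight-line graph.  Conversely, every plane straight-line graph can be redrawn
   with arcs or bends inside the diamonds, on both sides of each chord for multigraphs.  Finally,
   two parallel edges on the same side of their chord always cross, so at most two parallel edges
   can coexist, which gives the factor 2. *)

Ltac pt_simpl := unfold cross, dot, psub, padd, pscale in *; cbn [fst snd] in *.

Definition sqnorm (u : pt) : R := dot u u.

Lemma sqnorm_nonneg u : 0 <= sqnorm u.
Proof. destruct u as [x y]; unfold sqnorm, dot; cbn [fst snd]; nra. Qed.

Lemma sqnorm_eq0 u : sqnorm u = 0 -> u = (0, 0).
Proof. destruct u as [x y]; unfold sqnorm, dot; cbn [fst snd]; intros H; f_equal; nra. Qed.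

Lemma sqnorm_sub_pos p q : p <> q -> 0 < sqnorm (psub p q).
Proof.
  intros Hpq. destruct (Req_dec (sqnorm (psub p q)) 0) as [E|E].
  - exfalso; apply Hpq. apply sqnorm_eq0 in E. destruct p, q; pt_simpl.
    injection E; intros; f_equal; lra.
  - pose proof (sqnorm_nonneg (psub p q)); lra.
Qed.

Lemma cross_swap_ends a c x : cross (psub a c) (psub x c) = - cross (psub c a) (psub x a).
Proof. destruct a, c, x; pt_simpl; ring. Qed.

Lemma padd_psub o a : padd o (psub a o) = a.
Proof. destruct o, a; unfold padd, psub; cbn [fst snd]; f_equal; ring. Qed.

Lemma seg_sym p q x : seg p q x -> seg q p x.
Proof. intros [t [Ht ->]]. exists (1 - t). split; [lra|]. destruct p, q; pt_simpl; f_equal; ring. Qed.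

Lemma seg_cross a c x : seg a c x -> cross (psub c a) (psub x a) = 0.
Proof. intros [t [Ht ->]]. destruct a, c; pt_simpl; ring. Qed.

Lemma seg_right p q : seg p q q.
Proof. exists 1. split; [lra|]. destruct p, q; pt_simpl; f_equal; ring. Qed.

Lemma not_collinear_neq a m c : ~ collinear a m c -> a <> m /\ c <> m /\ a <> c.
Proof.
  unfold collinear; intros H; repeat split; intros E; apply H; rewrite E;
    destruct a, m, c; pt_simpl; ring.
Qed.

Lemma opp_sign_ratio (p q : R) : p * q < 0 -> 0 < p / (p - q) < 1.
Proof.
  intros H. destruct (Rlt_dec 0 p).
  - assert (q < 0) by nra. split; [apply Rdiv_lt_0_compat; lra|].
    apply (Rmult_lt_reg_r (p - q)); [lra|]. unfold Rdiv; rewrite Rmult_assoc, Rinv_l by lra. lra.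
  - assert (p < 0) by (destruct (Req_dec p 0); [subst; lra| lra]). assert (0 < q) by nra.
    replace (p / (p - q)) with ((-p) / (q - p)) by (field; lra).
    split; [apply Rdiv_lt_0_compat; lra|].
    apply (Rmult_lt_reg_r (q - p)); [lra|]. unfold Rdiv; rewrite Rmult_assoc, Rinv_l by lra. lra.
Qed.

Lemma segments_cross (a c b d : pt) :
  cross (psub c a) (psub b a) * cross (psub c a) (psub d a) < 0 ->
  cross (psub d b) (psub a b) * cross (psub d b) (psub c b) < 0 ->
  exists t mu, 0 < t < 1 /\ 0 < mu < 1 /\
    padd a (pscale t (psub c a)) = padd b (pscale mu (psub d b)).
Proof.
  set (fb := cross (psub c a) (psub b a)). set (fd := cross (psub c a) (psub d a)).
  set (ga := cross (psub d b) (psub a b)). set (gc := cross (psub d b) (psub c b)).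
  intros H1 H2.
  exists (ga / (ga - gc)), (fb / (fb - fd)).
  split; [apply opp_sign_ratio; auto|]. split; [apply opp_sign_ratio; auto|].
  assert (ga - gc <> 0) by nra. assert (fb - fd <> 0) by nra.
  unfold fb, fd, ga, gc in *. destruct a, b, c, d. pt_simpl. f_equal; field; auto.
Qed.

Lemma cross_eq0_scale z w : cross z w = 0 -> sqnorm z <> 0 -> w = pscale (dot z w / sqnorm z) z.
Proof.
  destruct z as [z1 z2], w as [w1 w2]. unfold sqnorm. pt_simpl. intros H Hn.
  assert (E1 : w1 * (z1*z1+z2*z2) = (z1*w1+z2*w2) * z1 - z2 * (z1 * w2 - z2 * w1)) by ring.
  assert (E2 : w2 * (z1*z1+z2*z2) = (z1*w1+z2*w2) * z2 + z1 * (z1 * w2 - z2 * w1)) by ring.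
  rewrite H in E1, E2.
  f_equal; apply (Rmult_eq_reg_r (z1*z1+z2*z2)); auto;
    [rewrite E1 | rewrite E2]; field; auto.
Qed.

Lemma parallel_same_length_eq y q : 0 < sqnorm y -> sqnorm q = sqnorm y ->
  cross y q = 0 -> 0 <= dot y q -> q = y.
Proof.
  intros Hy Hq Hc Hd.
  pose proof (cross_eq0_scale y q Hc ltac:(lra)) as Eq.
  set (lam := dot y q / sqnorm y) in *.
  assert (Hl2 : lam * lam = 1).
  { assert (E : sqnorm q = lam * lam * sqnorm y)
      by (rewrite Eq at 1; unfold sqnorm; destruct y; pt_simpl; ring).
    apply (Rmult_eq_reg_l (sqnorm y)); lra. }
  assert (0 <= lam) by (unfold lam, Rdiv; apply Rmult_le_pos; [lra | apply Rlt_le, Rinv_0_lt_compat; lra]).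
  assert (lam = 1) as Hl by nra.
  rewrite Eq, Hl. destruct y; unfold pscale; cbn [fst snd]. f_equal; ring.
Qed.

(** * Cones and diamonds *)

(* [cone k a c] is the closed cone with apex [a], axis the ray [ac] and half-opening [atan k];
   [diamond k a c] is the rhombus cut out by the two cones at the ends of [ac]. *)
Definition cone (k : R) (a c x : pt) : Prop :=
  Rabs (cross (psub c a) (psub x a)) <= k * dot (psub c a) (psub x a).

Definition diamond (k : R) (a c x : pt) : Prop := cone k a c x /\ cone k c a x.

Lemma cone_iff k a c x : cone k a c x <->
  0 <= k * dot (psub c a) (psub x a) - cross (psub c a) (psub x a) /\
  0 <= k * dot (psub c a) (psub x a) + cross (psub c a) (psub x a).
Proof. unfold cone, Rabs; destruct Rcase_abs; split; intros; lra. Qed.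

Definition comb3 (l1 l2 l3 : R) (p1 p2 p3 : pt) : pt :=
  (l1 * fst p1 + l2 * fst p2 + l3 * fst p3, l1 * snd p1 + l2 * snd p2 + l3 * snd p3).

Lemma cone_comb3 k a c p1 p2 p3 l1 l2 l3 :
  cone k a c p1 -> cone k a c p2 -> cone k a c p3 ->
  0 <= l1 -> 0 <= l2 -> 0 <= l3 -> l1 + l2 + l3 = 1 ->
  cone k a c (comb3 l1 l2 l3 p1 p2 p3).
Proof.
  rewrite !cone_iff. intros [A1 B1] [A2 B2] [A3 B3] H1 H2 H3 Hs.
  replace l3 with (1 - l1 - l2) in * by lra.
  destruct a, c, p1, p2, p3; unfold comb3; pt_simpl.
  split; nra.
Qed.

Lemma cone_apex k a c : cone k a c a.
Proof.
  unfold cone. destruct a, c; pt_simpl.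
  match goal with |- Rabs ?X <= _ * ?D => replace X with 0 by ring; replace D with 0 by ring end.
  rewrite Rabs_R0; lra.
Qed.

Lemma cone_target k a c : 0 <= k -> cone k a c c.
Proof.
  intros Hk. unfold cone. replace (cross (psub c a) (psub c a)) with 0 by (destruct a, c; pt_simpl; ring).
  rewrite Rabs_R0. apply Rmult_le_pos; [lra| apply (sqnorm_nonneg (psub c a))].
Qed.

Lemma cone_seg k a c p q x : cone k a c p -> cone k a c q -> seg p q x -> cone k a c x.
Proof.
  intros Hp Hq [t [Ht ->]].
  replace (padd p (pscale t (psub q p))) with (comb3 (1 - t) t 0 p q p)
    by (destruct p, q; unfold comb3; pt_simpl; f_equal; ring).
  apply cone_comb3; auto; lra.
Qed.

Lemma diamond_bounds k a c y : 0 < k -> diamond k a c y ->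
  0 <= dot (psub c a) (psub y a) <= sqnorm (psub c a) /\
  Rabs (cross (psub c a) (psub y a)) <= k * sqnorm (psub c a).
Proof.
  intros Hk [H1 H2]. unfold cone, sqnorm in *.
  destruct a as [a1 a2], c as [c1 c2], y as [y1 y2]. pt_simpl.
  pose proof (Rabs_pos ((c1 - a1) * (y2 - a2) - (c2 - a2) * (y1 - a1))).
  pose proof (Rabs_pos ((a1 - c1) * (y2 - c2) - (a2 - c2) * (y1 - c1))).
  assert (0 <= (c1 - a1) * (y1 - a1) + (c2 - a2) * (y2 - a2)) by nra.
  assert (0 <= (a1 - c1) * (y1 - c1) + (a2 - c2) * (y2 - c2)) by nra.
  split; [split; nra|].
  eapply Rle_trans; [exact H1|]. apply Rmult_le_compat_l; nra.
Qed.

(** * Separation for small openings *)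

Definition for_small_k (Q : R -> Prop) : Prop :=
  exists kap, 0 < kap /\ forall k, 0 < k <= kap -> Q k.

Lemma for_small_k_and Q1 Q2 :
  for_small_k Q1 -> for_small_k Q2 -> for_small_k (fun k => Q1 k /\ Q2 k).
Proof.
  intros [k1 [Hk1 H1]] [k2 [Hk2 H2]]. exists (Rmin k1 k2). split; [apply Rmin_case; lra|].
  intros k Hk. pose proof (Rmin_l k1 k2). pose proof (Rmin_r k1 k2).
  split; [apply H1 | apply H2]; lra.
Qed.

Lemma for_small_k_impl Q1 Q2 :
  for_small_k Q1 -> (forall k, 0 < k -> Q1 k -> Q2 k) -> for_small_k Q2.
Proof. intros [kap [Hk H]] Himp. exists kap; split; auto. intros k Hk'. apply Himp; [lra|auto]. Qed.

Lemma for_small_k_hyp (H : Prop) Q : (H -> for_small_k Q) -> for_small_k (fun k => H -> Q k).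
Proof.
  intros HQ. destruct (classic H) as [h|h].
  - apply (for_small_k_impl Q); auto.
  - exists 1; split; [lra|]. intros; contradiction.
Qed.

Lemma for_small_k_forall_in {A} (L : list A) (Q : A -> R -> Prop) :
  (forall x, In x L -> for_small_k (Q x)) ->
  for_small_k (fun k => forall x, In x L -> Q x k).
Proof.
  induction L as [|y L IH]; intros H.
  - exists 1; split; [lra|]. intros k _ x [].
  - apply (for_small_k_impl (fun k => Q y k /\ forall x, In x L -> Q x k)).
    + apply for_small_k_and; [apply H; left; auto | apply IH; intros x Hx; apply H; right; auto].
    + intros k _ [Hy HL] x [<-|Hx]; auto.
Qed.

Lemma cone_excludes_point (a c v : pt) : cross (psub c a) (psub v a) <> 0 ->
  for_small_k (fun k => ~ cone k a c v).
Proof.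
  unfold cone. set (X := cross (psub c a) (psub v a)). set (D := dot (psub c a) (psub v a)).
  intros HX. assert (0 < Rabs X) by (apply Rabs_pos_lt; auto). pose proof (Rabs_pos D).
  exists (Rabs X / (Rabs D + 1)). split; [apply Rdiv_lt_0_compat; lra|].
  intros k [Hk Hk2] Hc.
  assert (k * D <= k * Rabs D) by (apply Rmult_le_compat_l; [lra| apply Rle_abs]).
  assert (k * Rabs D <= Rabs X / (Rabs D + 1) * Rabs D) by (apply Rmult_le_compat_r; lra).
  assert (Rabs X / (Rabs D + 1) * Rabs D < Rabs X).
  { unfold Rdiv. apply (Rmult_lt_reg_r (Rabs D + 1)); [lra|]. field_simplify; [nra|lra]. }
  lra.
Qed.

Lemma narrow_cones_meet_at_apex (u z w : pt) (k : R) : 0 <= k ->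
  Rabs (cross u w) <= k * dot u w -> Rabs (cross z w) <= k * dot z w ->
  4 * k^2 * (sqnorm u * sqnorm z) < (cross u z)^2 -> w = (0, 0).
Proof.
  destruct u as [u1 u2], z as [z1 z2], w as [w1 w2]. unfold sqnorm. pt_simpl.
  intros Hk H1 H2 H3.
  set (U := u1^2+u2^2) in *. set (Z := z1^2+z2^2) in *. set (W := w1^2+w2^2).
  set (K := u1*z2-u2*z1) in *.
  set (p := u1*w2 - u2*w1) in *. set (q := z1*w2 - z2*w1) in *.
  replace (u1*u1+u2*u2) with U in * by (unfold U; ring).
  replace (z1*z1+z2*z2) with Z in * by (unfold Z; ring).
  assert (HU : 0 <= U) by (unfold U; nra). assert (HZ : 0 <= Z) by (unfold Z; nra).
  assert (HW : 0 <= W) by (unfold W; nra).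
  assert (Hsq : forall x y, Rabs x <= y -> x^2 <= y^2).
  { intros x y Hxy. pose proof (Rabs_pos x). rewrite <- (pow2_abs x). nra. }
  apply Hsq in H1. apply Hsq in H2.
  assert (Hp : p^2 <= k^2 * (U * W)).
  { assert (U*W = (u1*w1+u2*w2)^2 + p^2) by (unfold U, W, p; ring). nra. }
  assert (Hq : q^2 <= k^2 * (Z * W)).
  { assert (Z*W = (z1*w1+z2*w2)^2 + q^2) by (unfold Z, W, q; ring). nra. }
  (* [w] is recovered from its cross products with [u] and [z]. *)
  assert (E : K^2 * W = (q*u1 - p*z1)^2 + (q*u2 - p*z2)^2) by (unfold K, W, p, q; ring).
  assert (E2 : K^2 * W <= 2 * (q^2 * U + p^2 * Z)).
  { assert (Hd : forall x y, (x - y)^2 <= 2 * (x^2 + y^2))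
    by (intros x y; pose proof (pow2_ge_0 (x + y)); nra).
    rewrite E. pose proof (Hd (q*u1) (p*z1)). pose proof (Hd (q*u2) (p*z2)).
    unfold U, Z. nra. }
  assert (E3 : K^2 * W <= 4 * k^2 * (U * Z) * W) by nra.
  assert (W = 0) by nra.
  unfold W in *. f_equal; nra.
Qed.

Lemma cones_meet_only_at_apex (a c d : pt) : cross (psub c a) (psub d a) <> 0 ->
  for_small_k (fun k => forall x, cone k a c x -> cone k a d x -> x = a).
Proof.
  set (u := psub c a). set (z := psub d a). set (K := cross u z).
  set (U := sqnorm u). set (Z := sqnorm z). intros HK.
  pose proof (sqnorm_nonneg u) as HU. pose proof (sqnorm_nonneg z) as HZ. fold U Z in HU, HZ.
  assert (0 < Rabs K) by (apply Rabs_pos_lt; auto).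
  exists (Rabs K / (U + Z + 1)). split; [apply Rdiv_lt_0_compat; lra|].
  intros k [Hk Hk2] x Hc Hd.
  assert (Hkb : k * (U + Z + 1) <= Rabs K).
  { apply Rmult_le_reg_r with (/ (U + Z + 1)); [apply Rinv_0_lt_compat; lra|].
    rewrite Rmult_assoc, Rinv_r by lra. lra. }
  assert (Hx0 : psub x a = (0, 0)).
  { apply (narrow_cones_meet_at_apex u z (psub x a) k); auto; [lra|].
    fold K U Z. rewrite <- (pow2_abs K).
    assert (4 * (U * Z) <= (U + Z)^2) by (pose proof (pow2_ge_0 (U - Z)); nra).
    apply Rle_lt_trans with (k^2 * (U + Z)^2); [nra|].
    apply Rlt_le_trans with ((k * (U + Z + 1))^2); [nra|].
    apply pow_incr; nra. }
  destruct x, a; unfold psub in Hx0; cbn [fst snd] in Hx0. injection Hx0; intros.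
  f_equal; lra.
Qed.

Lemma diamond_meets_crossing_chord (a c b d : pt) (lam0 mu0 : R) :
  cross (psub c a) (psub d b) <> 0 -> 0 < mu0 < 1 ->
  padd a (pscale lam0 (psub c a)) = padd b (pscale mu0 (psub d b)) ->
  for_small_k (fun k => forall y, diamond k a c y -> cross (psub d b) (psub y b) = 0 ->
    exists mu, 0 < mu < 1 /\ y = padd b (pscale mu (psub d b))).
Proof.
  intros HK Hmu Hz.
  set (K := cross (psub c a) (psub d b)) in *. set (U := sqnorm (psub c a)).
  pose proof (sqnorm_nonneg (psub c a)) as HU. fold U in HU.
  set (m := Rmin mu0 (1 - mu0)).
  assert (Hm : 0 < m) by (unfold m; apply Rmin_case; lra).
  assert (HaK : 0 < Rabs K) by (apply Rabs_pos_lt; auto).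
  exists (m * Rabs K / (U + 1)). split; [apply Rdiv_lt_0_compat; [nra|lra]|].
  intros k [Hk Hk2] y Hy Hc.
  destruct (diamond_bounds k a c y Hk Hy) as [_ Hb]. fold U in Hb.
  assert (Hbd : d <> b) by (intros ->; apply HK; unfold K; destruct a, b, c; pt_simpl; ring).
  set (mu := (dot (psub d b) (psub y b)) / sqnorm (psub d b)).
  assert (Hy2 : y = padd b (pscale mu (psub d b))).
  { pose proof (sqnorm_sub_pos d b Hbd) as Hn.
    rewrite <- (padd_psub b y) at 1. f_equal. apply cross_eq0_scale; auto; lra. }
  assert (HX : cross (psub c a) (psub y a) = (mu - mu0) * K).
  { rewrite Hy2. unfold K. destruct a as [a1 a2], b as [b1 b2], c as [c1 c2], d as [d1 d2].
    unfold padd, pscale, psub in Hz. cbn [fst snd] in Hz.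
    injection Hz; intros e2 e1. pt_simpl.
    assert ((c1-a1)*(b2 - a2 + mu0*(d2-b2)) = (c1-a1)*(lam0*(c2-a2))) by (f_equal; lra).
    assert ((c2-a2)*(b1 - a1 + mu0*(d1-b1)) = (c2-a2)*(lam0*(c1-a1))) by (f_equal; lra).
    lra. }
  rewrite HX, Rabs_mult in Hb.
  exists mu. split; [|exact Hy2].
  assert (Rabs (mu - mu0) * Rabs K <= m * Rabs K / (U + 1) * U).
  { eapply Rle_trans; [exact Hb|]. apply Rmult_le_compat_r; lra. }
  assert (m * Rabs K / (U + 1) * U < m * Rabs K).
  { unfold Rdiv. apply (Rmult_lt_reg_r (U + 1)); [lra|]. field_simplify; nra. }
  assert (Hclose : Rabs (mu - mu0) < m) by nra.
  pose proof (Rmin_l mu0 (1 - mu0)). pose proof (Rmin_r mu0 (1 - mu0)).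
  apply Rabs_def2 in Hclose. unfold m in *. lra.
Qed.

Lemma diamonds_disjoint_of_positive_side (a c b d : pt) : b <> d ->
  0 < cross (psub c a) (psub b a) -> 0 < cross (psub c a) (psub d a) ->
  for_small_k (fun k => forall x, diamond k a c x -> diamond k b d x -> False).
Proof.
  set (fb := cross (psub c a) (psub b a)). set (fd := cross (psub c a) (psub d a)).
  intros Hbd Hb Hd.
  set (mn := Rmin fb fd). assert (Hmn : 0 < mn) by (unfold mn; apply Rmin_case; lra).
  pose proof (Rmin_l fb fd) as Hmb. pose proof (Rmin_r fb fd) as Hmd. fold mn in Hmb, Hmd.
  set (U := sqnorm (psub c a)). set (Q := Rabs (dot (psub c a) (psub d b))).
  pose proof (sqnorm_nonneg (psub c a)) as HU. pose proof (Rabs_pos (dot (psub c a) (psub d b))) as HQ.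
  fold U in HU. fold Q in HQ.
  exists (mn / (U + Q + 1)). split; [apply Rdiv_lt_0_compat; lra|].
  intros k [Hk Hk2] x H1 H2.
  destruct (diamond_bounds k a c x Hk H1) as [_ B1]. fold U in B1.
  destruct (diamond_bounds k b d x Hk H2) as [[B2 B3] B4].
  set (Z := sqnorm (psub d b)) in *. pose proof (sqnorm_sub_pos d b (not_eq_sym Hbd)) as HZ. fold Z in HZ.
  set (D' := dot (psub d b) (psub x b)) in *. set (X' := cross (psub d b) (psub x b)) in *.
  set (fx := cross (psub c a) (psub x a)) in *.
  (* [fx] interpolates between [fb] and [fd] along [bd], up to the offset [X'] from that line. *)
  assert (Id : Z * fx = (Z - D') * fb + D' * fd + X' * dot (psub c a) (psub d b)).
  { unfold Z, fx, D', X', fb, fd, sqnorm. destruct a, b, c, d, x. pt_simpl. ring. }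
  assert (HX' : - (k * Z * Q) <= X' * dot (psub c a) (psub d b)).
  { pose proof (Rle_abs (- (X' * dot (psub c a) (psub d b)))) as Habs.
    rewrite Rabs_Ropp, Rabs_mult in Habs. fold Q in Habs.
    assert (Rabs X' * Q <= k * Z * Q) by (apply Rmult_le_compat_r; auto). lra. }
  assert (Hlow : Z * (mn - k * Q) <= Z * fx) by (rewrite Id; nra).
  assert (fx <= k * U) by (pose proof (Rle_abs fx); lra).
  assert (k * (U + Q) < mn).
  { apply Rle_lt_trans with (mn / (U + Q + 1) * (U + Q)); [apply Rmult_le_compat_r; lra|].
    unfold Rdiv. apply (Rmult_lt_reg_r (U + Q + 1)); [lra|]. field_simplify; nra. }
  apply Rmult_le_reg_l in Hlow; lra.
Qed.

Lemma diamonds_disjoint (a c b d : pt) : a <> c -> b <> d ->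
  cross (psub c a) (psub b a) <> 0 -> cross (psub c a) (psub d a) <> 0 ->
  cross (psub d b) (psub a b) <> 0 -> cross (psub d b) (psub c b) <> 0 ->
  (forall y, seg a c y -> ~ seg b d y) ->
  for_small_k (fun k => forall x, diamond k a c x -> diamond k b d x -> False).
Proof.
  intros Hac Hbd H1 H2 H3 H4 Hdis.
  destruct (Rlt_dec 0 (cross (psub c a) (psub b a) * cross (psub c a) (psub d a))) as [h1|h1].
  { destruct (Rlt_dec 0 (cross (psub c a) (psub b a))).
    - apply diamonds_disjoint_of_positive_side; auto; nra.
    - apply (for_small_k_impl (fun k => forall x, diamond k c a x -> diamond k b d x -> False)).
      + apply diamonds_disjoint_of_positive_side; auto; rewrite cross_swap_ends; nra.
      + intros k _ H x [Hx1 Hx2]. apply (H x). split; auto. }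
  destruct (Rlt_dec 0 (cross (psub d b) (psub a b) * cross (psub d b) (psub c b))) as [h2|h2].
  { apply (for_small_k_impl (fun k => forall x, diamond k b d x -> diamond k a c x -> False)).
    - destruct (Rlt_dec 0 (cross (psub d b) (psub a b))).
      + apply diamonds_disjoint_of_positive_side; auto; nra.
      + apply (for_small_k_impl (fun k => forall x, diamond k d b x -> diamond k a c x -> False)).
        * apply diamonds_disjoint_of_positive_side; auto; rewrite cross_swap_ends; nra.
        * intros k _ H x [Hx1 Hx2]. apply (H x). split; auto.
    - intros k _ H x Hx Hy. exact (H x Hy Hx). }
  exfalso.
  assert (cross (psub c a) (psub b a) * cross (psub c a) (psub d a) < 0).
  { assert (cross (psub c a) (psub b a) * cross (psub c a) (psub d a) <> 0)
      by (apply Rmult_integral_contrapositive; auto). lra. }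
  assert (cross (psub d b) (psub a b) * cross (psub d b) (psub c b) < 0).
  { assert (cross (psub d b) (psub a b) * cross (psub d b) (psub c b) <> 0)
      by (apply Rmult_integral_contrapositive; auto). lra. }
  destruct (segments_cross a c b d H H0) as [t [mu [Ht [Hmu E]]]].
  apply (Hdis (padd a (pscale t (psub c a)))); [exists t; split; [lra|auto]|].
  rewrite E. exists mu; split; [lra|auto].
Qed.

Lemma crossing_point_interior a c b d x :
  cross (psub c a) (psub b a) <> 0 -> cross (psub c a) (psub d a) <> 0 -> seg a c x -> seg b d x ->
  cross (psub c a) (psub d b) <> 0 /\ exists t mu, 0 < mu < 1 /\
    padd a (pscale t (psub c a)) = padd b (pscale mu (psub d b)).
Proof.
  intros Hcab Hcad [t [Ht Ex]] [mu [Hmu Ey]]. rewrite Ex in Ey.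
  destruct a as [a1 a2], b as [b1 b2], c as [c1 c2], d as [d1 d2].
  unfold padd, pscale, psub in Ey; cbn [fst snd] in Ey. injection Ey; intros E2 E1.
  split; [| exists t, mu; split; [| unfold padd, pscale, psub; cbn [fst snd]; f_equal; lra]].
  - intro K0. apply Hcab. pt_simpl.
    replace (b1 - a1) with (t * (c1 - a1) - mu * (d1 - b1)) by lra.
    replace (b2 - a2) with (t * (c2 - a2) - mu * (d2 - b2)) by lra.
    replace 0 with (- mu * 0) by ring. rewrite <- K0. ring.
  - split; [destruct (Req_dec mu 0) | destruct (Req_dec mu 1)]; try lra; subst mu; exfalso;
      [apply Hcab | apply Hcad]; pt_simpl.
    + replace (b1 - a1) with (t * (c1 - a1)) by lra. replace (b2 - a2) with (t * (c2 - a2)) by lra. ring.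
    + replace (d1 - a1) with (t * (c1 - a1)) by lra. replace (d2 - a2) with (t * (c2 - a2)) by lra. ring.
Qed.

Record separated (P : list pt) (k : R) : Prop := {
  cone_free : forall a c v, In a P -> In c P -> In v P ->
    a <> c -> v <> a -> v <> c -> ~ cone k a c v;
  cones_meet_at_apex : forall a c d x, In a P -> In c P -> In d P ->
    a <> c -> a <> d -> c <> d -> cone k a c x -> cone k a d x -> x = a;
  diamonds_apart : forall a c b d x, In a P -> In c P -> In b P -> In d P ->
    a <> c -> a <> b -> a <> d -> c <> b -> c <> d -> b <> d ->
    (forall y, seg a c y -> ~ seg b d y) -> diamond k a c x -> diamond k b d x -> False;
  diamond_meets_chord_inside : forall a c b d y, In a P -> In c P -> In b P -> In d P ->
    a <> c -> a <> b -> a <> d -> c <> b -> c <> d -> b <> d ->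
    (exists x, seg a c x /\ seg b d x) ->
    diamond k a c y -> cross (psub d b) (psub y b) = 0 ->
    exists mu, 0 < mu < 1 /\ y = padd b (pscale mu (psub d b)) }.

Lemma for_small_k_forall_in3 {A} (L : list A) (Q : A -> A -> A -> R -> Prop) :
  (forall x y z, In x L -> In y L -> In z L -> for_small_k (Q x y z)) ->
  for_small_k (fun k => forall x y z, In x L -> In y L -> In z L -> Q x y z k).
Proof.
  intros H. apply (for_small_k_impl (fun k => forall x, In x L -> forall y, In y L ->
    forall z, In z L -> Q x y z k)).
  - do 3 (apply for_small_k_forall_in; intros ? ?). auto.
  - intros k _ Hk x y z Hx Hy Hz. auto.
Qed.

Lemma for_small_k_forall_in4 {A} (L : list A) (Q : A -> A -> A -> A -> R -> Prop) :
  (forall x y z w, In x L -> In y L -> In z L -> In w L -> for_small_k (Q x y z w)) ->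
  for_small_k (fun k => forall x y z w, In x L -> In y L -> In z L -> In w L -> Q x y z w k).
Proof.
  intros H. apply (for_small_k_impl (fun k => forall x, In x L -> forall y, In y L ->
    forall z, In z L -> forall w, In w L -> Q x y z w k)).
  - do 4 (apply for_small_k_forall_in; intros ? ?). auto.
  - intros k _ Hk x y z w Hx Hy Hz Hw. auto.
Qed.

Ltac for_small_k_intros :=
  match goal with
  | |- for_small_k (fun k => ?H -> _) => apply for_small_k_hyp; intros ?; for_small_k_intros
  | _ => idtac
  end.

Section SmallOpening.

Variable P : list pt.
Hypothesis GP : general_position P.

Lemma cone_free_for_small_k : for_small_k (fun k => forall a c v, In a P -> In c P -> In v P ->
  a <> c -> v <> a -> v <> c -> ~ cone k a c v).
Proof.
  apply for_small_k_forall_in3; intros a c v Ha Hc Hv; for_small_k_intros.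
  apply cone_excludes_point, GP; auto.
Qed.

Lemma cones_meet_at_apex_for_small_k : for_small_k (fun k => forall a c d, In a P -> In c P -> In d P ->
  a <> c -> a <> d -> c <> d -> forall x, cone k a c x -> cone k a d x -> x = a).
Proof.
  apply for_small_k_forall_in3; intros a c d Ha Hc Hd; for_small_k_intros.
  apply cones_meet_only_at_apex, GP; auto.
Qed.

Lemma diamonds_apart_for_small_k : for_small_k (fun k =>
  forall a c b d, In a P -> In c P -> In b P -> In d P ->
  a <> c -> a <> b -> a <> d -> c <> b -> c <> d -> b <> d ->
  (forall y, seg a c y -> ~ seg b d y) -> forall x, diamond k a c x -> diamond k b d x -> False).
Proof.
  apply for_small_k_forall_in4; intros a c b d Ha Hc Hb Hd; for_small_k_intros.
  apply diamonds_disjoint; auto; apply GP; auto.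
Qed.

Lemma diamond_meets_chord_inside_for_small_k : for_small_k (fun k =>
  forall a c b d, In a P -> In c P -> In b P -> In d P ->
  a <> c -> a <> b -> a <> d -> c <> b -> c <> d -> b <> d ->
  (exists x, seg a c x /\ seg b d x) ->
  forall y, diamond k a c y -> cross (psub d b) (psub y b) = 0 ->
  exists mu, 0 < mu < 1 /\ y = padd b (pscale mu (psub d b))).
Proof.
  apply for_small_k_forall_in4; intros a c b d Ha Hc Hb Hd; for_small_k_intros.
  match goal with Hmeet : exists x, _ |- _ => destruct Hmeet as [x [Hx1 Hx2]] end.
  destruct (crossing_point_interior a c b d x) as [HK [t [mu0 [Hmu E]]]]; auto; try apply GP; auto.
  apply (diamond_meets_crossing_chord a c b d t mu0); auto.
Qed.

Lemma separated_for_small_k : for_small_k (separated P).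
Proof.
  apply (for_small_k_impl _ _ (for_small_k_and _ _
    (for_small_k_and _ _ cone_free_for_small_k cones_meet_at_apex_for_small_k)
    (for_small_k_and _ _ diamonds_apart_for_small_k diamond_meets_chord_inside_for_small_k))).
  intros k _ [[H1 H2] [H3 H4]]. constructor.
  - exact H1.
  - intros a c d x Ha Hc Hd Hac Had Hcd. exact (H2 a c d Ha Hc Hd Hac Had Hcd x).
  - intros a c b d x Ha Hc Hb Hd Hac Hab Had Hcb Hcd Hbd Hs.
    exact (H3 a c b d Ha Hc Hb Hd Hac Hab Had Hcb Hcd Hbd Hs x).
  - intros a c b d y Ha Hc Hb Hd Hac Hab Had Hcb Hcd Hbd Hs.
    exact (H4 a c b d Ha Hc Hb Hd Hac Hab Had Hcb Hcd Hbd Hs y).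
Qed.

End SmallOpening.

(** * Lenses and their crossings *)

Lemma continuity_pt_Rmax f g s : continuity_pt f s -> continuity_pt g s ->
  continuity_pt (fun t => Rmax (f t) (g t)) s.
Proof.
  intros Hf Hg.
  apply (continuity_pt_locally_ext (fun t => (f t + g t + Rabs (f t - g t)) / 2) _ 1); [lra| |].
  - intros y _. unfold Rmax, Rabs. destruct Rle_dec, Rcase_abs; lra.
  - assert (continuity_pt (fun t => Rabs (f t - g t)) s).
    { apply (continuity_pt_comp (fun t => f t - g t) Rabs); [reg | apply Rcontinuity_abs]. }
    reg.
Qed.

Lemma continuity_pt_Rmin f g s : continuity_pt f s -> continuity_pt g s ->
  continuity_pt (fun t => Rmin (f t) (g t)) s.
Proof.
  intros Hf Hg.
  apply (continuity_pt_locally_ext (fun t => - Rmax (- f t) (- g t)) _ 1); [lra| |].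
  - intros y _. unfold Rmax, Rmin. destruct Rle_dec, Rle_dec; lra.
  - apply continuity_pt_opp, continuity_pt_Rmax; reg.
Qed.

(* The zero of [Rmax g (- f)] given by the intermediate value theorem cannot lie on [f = 0],
   where [g] is positive. *)
Lemma zero_on_positive_side (f g : R -> R) :
  (forall s, 0 <= s <= 1 -> continuity_pt f s) -> (forall s, 0 <= s <= 1 -> continuity_pt g s) ->
  f 0 < 0 -> 0 < f 1 -> g 1 < 0 -> (forall s, 0 <= s <= 1 -> f s = 0 -> 0 < g s) ->
  exists s, 0 <= s <= 1 /\ g s = 0 /\ 0 <= f s.
Proof.
  intros Hf Hg Hf0 Hf1 Hg1 Hpos.
  destruct (IVT_interv (fun s => - Rmax (g s) (- f s)) 0 1) as [s [Hs Hz]].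
  - intros s Hs. apply continuity_pt_opp, continuity_pt_Rmax;
      [apply Hg | apply continuity_pt_opp, Hf]; auto.
  - lra.
  - pose proof (Rmax_r (g 0) (- f 0)). lra.
  - unfold Rmax; destruct Rle_dec; lra.
  - exists s. split; [exact Hs|]. revert Hz. unfold Rmax; destruct Rle_dec; intros Hz.
    + assert (Hzero : f s = 0) by lra. specialize (Hpos s Hs Hzero). lra.
    + lra.
Qed.

Definition path_continuous (G : pt -> R) : Prop := forall (fx fy : R -> R) s,
  continuity_pt fx s -> continuity_pt fy s -> continuity_pt (fun t => G (fx t, fy t)) s.

Definition path_in (C : pt -> Prop) (p q : pt) : Prop :=
  exists px py : R -> R, (forall s, continuity_pt px s) /\ (forall s, continuity_pt py s) /\
    (px 0, py 0) = p /\ (px 1, py 1) = q /\ forall s, 0 <= s <= 1 -> C (px s, py s).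

Lemma path_in_sym C p q : path_in C p q -> path_in C q p.
Proof.
  intros [px [py [Cx [Cy [E0 [E1 HC]]]]]].
  exists (fun s => px (1 - s)), (fun s => py (1 - s)). repeat split.
  - intros s. apply (continuity_pt_comp (fun s => 1 - s) px); [reg | apply Cx].
  - intros s. apply (continuity_pt_comp (fun s => 1 - s) py); [reg | apply Cy].
  - rewrite Rminus_0_r. exact E1.
  - rewrite Rminus_diag. exact E0.
  - intros s Hs. apply HC. lra.
Qed.

(* [G] cuts out, on the [eps] side of the chord [ac], the lens between the chord and the
   curve [C]: [G >= 0] stays in the diamond, [G = 0] is on [C], and [G > 0] on the open chord. *)
Definition lens_barrier (k : R) (a c : pt) (C : pt -> Prop) (G : pt -> R) (eps : R) : Prop :=
  (eps = 1 \/ eps = -1) /\ path_continuous G /\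
  (forall mu, 0 < mu < 1 -> 0 < G (padd a (pscale mu (psub c a)))) /\
  (forall x, 0 <= G x -> 0 <= eps * cross (psub c a) (psub x a) -> diamond k a c x) /\
  (forall x, G x = 0 -> 0 <= eps * cross (psub c a) (psub x a) -> C x).

Record lens (k : R) (a c : pt) (C : pt -> Prop) : Prop := {
  lens_in_diamond : forall x, C x -> diamond k a c x;
  lens_path : path_in C a c;
  lens_has_barrier : exists G eps, lens_barrier k a c C G eps }.

Lemma chords_cross_opposite_sides a c b d :
  cross (psub d b) (psub a b) <> 0 -> cross (psub d b) (psub c b) <> 0 ->
  (exists x, seg a c x /\ seg b d x) ->
  cross (psub d b) (psub a b) * cross (psub d b) (psub c b) < 0.
Proof.
  intros Ha Hc [x [[t [Ht ->]] Hx]]. apply seg_cross in Hx.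
  set (A := cross (psub d b) (psub a b)) in *. set (C := cross (psub d b) (psub c b)) in *.
  assert (E : (1 - t) * A + t * C = 0).
  { rewrite <- Hx. unfold A, C. destruct a, b, c, d; pt_simpl; ring. }
  destruct (Req_dec t 0) as [->|Ht0]; [lra|].
  assert (0 < C * C) by (apply Rsqr_pos_lt in Hc; unfold Rsqr in Hc; lra).
  assert ((1 - t) * (A * C) = - t * (C * C)) by (rewrite <- Rmult_assoc, <- Rmult_assoc; nra).
  destruct (Req_dec t 1) as [->|Ht1]; [nra|]. nra.
Qed.

Section CrossingLenses.

Variables (P : list pt) (k : R).
Hypothesis GP : general_position P.
Hypothesis Hsep : separated P k.

Variables a c b d : pt.
Hypotheses (Ha : In a P) (Hc : In c P) (Hb : In b P) (Hd : In d P).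
Hypotheses (Hac : a <> c) (Hab : a <> b) (Had : a <> d) (Hcb : c <> b) (Hcd : c <> d) (Hbd : b <> d).
Hypothesis Hmeet : exists x, seg a c x /\ seg b d x.

Lemma path_meets_lens_boundary (C D : pt -> Prop) G eps p q :
  path_in (fun x => C x /\ diamond k a c x) p q -> (p = a \/ p = c) -> (q = a \/ q = c) ->
  lens_barrier k b d D G eps ->
  eps * cross (psub d b) (psub p b) < 0 -> 0 < eps * cross (psub d b) (psub q b) ->
  exists x, C x /\ D x.
Proof.
  intros [px [py [Cx [Cy [E0 [E1 HC]]]]]] Hp Hq [Heps [HG [Hpos [Hin Hon]]]] Hlp Hlq.
  set (l := fun x => eps * cross (psub d b) (psub x b)).
  destruct (zero_on_positive_side (fun s => l (px s, py s)) (fun s => G (px s, py s)))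
    as [s [Hs [HGs Hls]]].
  - intros s _. unfold l. destruct b, d; pt_simpl. pose proof (Cx s); pose proof (Cy s). reg.
  - intros s _. apply HG; auto.
  - unfold l; rewrite E0; auto.
  - unfold l; rewrite E1; auto.
  - rewrite E1. destruct (Rlt_dec (G q) 0) as [|Hge]; auto. exfalso. apply Rnot_lt_le in Hge.
    destruct (Hin q) as [Hcone _]; [lra | lra |].
    destruct Hq as [-> | ->]; [apply (cone_free _ _ Hsep b d a) | apply (cone_free _ _ Hsep b d c)]; auto.
  - intros s Hs Hl. destruct (HC s Hs) as [_ HD].
    assert (cross (psub d b) (psub (px s, py s) b) = 0) by (unfold l in Hl; destruct Heps; subst; lra).
    destruct (diamond_meets_chord_inside _ _ Hsep a c b d (px s, py s)) as [mu [Hmu ->]]; auto.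
  - exists (px s, py s). split; [apply HC; auto | apply Hon; auto].
Qed.

Lemma lenses_cross (C D : pt -> Prop) : lens k a c C -> lens k b d D -> exists x, C x /\ D x.
Proof.
  intros [HinC HpathC _] [_ _ [G [eps HbarD]]].
  assert (Hpath : path_in (fun x => C x /\ diamond k a c x) a c).
  { destruct HpathC as [px [py [Cx [Cy [E0 [E1 HCs]]]]]].
    exists px, py; repeat split; auto; apply HinC, HCs; auto. }
  assert (Hopp : (eps * cross (psub d b) (psub a b)) * (eps * cross (psub d b) (psub c b)) < 0).
  { replace ((eps * cross (psub d b) (psub a b)) * (eps * cross (psub d b) (psub c b)))
      with ((eps * eps) * (cross (psub d b) (psub a b) * cross (psub d b) (psub c b))) by ring.
    replace (eps * eps) with 1 by (destruct HbarD as [[-> | ->] _]; ring). rewrite Rmult_1_l.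
    apply chords_cross_opposite_sides; auto; apply GP; auto. }
  destruct (Rlt_dec (eps * cross (psub d b) (psub a b)) 0) as [Hneg | Hnn].
  - apply (path_meets_lens_boundary C D G eps a c); auto. nra.
  - apply Rnot_lt_le in Hnn. destruct Hnn as [Hpos | Hz]; [| rewrite <- Hz in Hopp; lra].
    apply (path_meets_lens_boundary C D G eps c a); auto; [apply path_in_sym; auto | nra].
Qed.

End CrossingLenses.

(** * Arc edges *)

Lemma cos_sign_mul s t : (s = 1 \/ s = -1) -> cos (s * t) = cos t.
Proof. intros [-> | ->]; [f_equal; ring|]. replace (-1 * t) with (- t) by ring. apply cos_neg. Qed.

Lemma sin_sign_mul s t : (s = 1 \/ s = -1) -> sin (s * t) = s * sin t.
Proof. intros [-> | ->]; [rewrite !Rmult_1_l; auto|]. replace (-1 * t) with (- t) by ring.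
rewrite sin_neg; ring. Qed.

Lemma sign_opp s : (s = 1 \/ s = -1) -> (- s = 1 \/ - s = -1).
Proof. intros [-> | ->]; [right | left]; ring. Qed.

Lemma rot_rot x y v : rot x (rot y v) = rot (x + y) v.
Proof. destruct v. unfold rot; cbn [fst snd]. rewrite cos_plus, sin_plus. f_equal; ring. Qed.

Lemma rot_0 v : rot 0 v = v.
Proof. destruct v. unfold rot; cbn [fst snd]. rewrite cos_0, sin_0. f_equal; ring. Qed.

Lemma sqnorm_rot t v : sqnorm (rot t v) = sqnorm v.
Proof.
  destruct v as [v1 v2]. unfold sqnorm, rot, dot; cbn [fst snd].
  pose proof (sin2_cos2 t) as H. unfold Rsqr in H.
  transitivity ((v1*v1+v2*v2) * (sin t * sin t + cos t * cos t)); [ring|]. rewrite H; ring.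
Qed.

Lemma rot_sign_mul s t v : (s = 1 \/ s = -1) ->
  rot (s * t) v = (cos t * fst v - s * sin t * snd v, s * sin t * fst v + cos t * snd v).
Proof. intros Hs. unfold rot. rewrite cos_sign_mul, sin_sign_mul by auto. f_equal; ring. Qed.

(* The point on the perpendicular bisector of [ac] at signed distance [lam * |ac|] from the
   midpoint, positive distances being on the left of [ac]. *)
Definition bisector_pt (a c : pt) (lam : R) : pt :=
  (fst a + (fst c - fst a) / 2 - lam * (snd c - snd a),
   snd a + (snd c - snd a) / 2 + lam * (fst c - fst a)).

Lemma bisector_pt_sym a c lam : bisector_pt c a lam = bisector_pt a c (- lam).
Proof. unfold bisector_pt; destruct a, c; cbn [fst snd]; f_equal; field. Qed.

Lemma cross_bisector_pt a c lam :
  cross (psub c a) (psub (bisector_pt a c lam) a) = lam * sqnorm (psub c a).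
Proof. unfold bisector_pt, sqnorm; destruct a, c; pt_simpl; field. Qed.

Lemma bisector_pt_not_end a c lam : a <> c -> lam <> 0 ->
  bisector_pt a c lam <> a /\ bisector_pt a c lam <> c.
Proof.
  intros Hne Hl. pose proof (sqnorm_sub_pos c a (not_eq_sym Hne)) as Hn.
  pose proof (cross_bisector_pt a c lam) as E.
  assert (Hnz : lam * sqnorm (psub c a) <> 0) by (apply Rmult_integral_contrapositive; split; lra).
  split; intro Eq; rewrite Eq in E; apply Hnz; rewrite <- E; destruct a, c; pt_simpl; ring.
Qed.

Lemma disk_side_in_cone (a c x : pt) (lam : R) : lam <> 0 ->
  sqnorm (psub x (bisector_pt a c lam)) <= sqnorm (psub a (bisector_pt a c lam)) ->
  lam * cross (psub c a) (psub x a) <= 0 ->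
  cone (/ (2 * Rabs lam)) a c x.
Proof.
  intros Hl Hn Hx.
  assert (Hw : sqnorm (psub x a) <= dot (psub c a) (psub x a) + 2 * lam * cross (psub c a) (psub x a)).
  { revert Hn. unfold bisector_pt, sqnorm. destruct a, c, x. pt_simpl. intros. nra. }
  pose proof (sqnorm_nonneg (psub x a)).
  assert (Hal : 0 < Rabs lam) by (apply Rabs_pos_lt; auto).
  assert (HX : 2 * Rabs lam * Rabs (cross (psub c a) (psub x a))
    = - (2 * lam * cross (psub c a) (psub x a))).
  { rewrite Rmult_assoc, <- Rabs_mult. unfold Rabs; destruct Rcase_abs; nra. }
  unfold cone. apply Rmult_le_reg_l with (2 * Rabs lam); [lra|].
  rewrite <- Rmult_assoc, Rinv_r by lra. lra.
Qed.

Lemma arc_in_cone (o v : pt) (s th tau : R) : (s = 1 \/ s = -1) -> 0 < th < PI / 2 -> 0 <= tau <= th ->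
  cone (sin th / cos th) (padd o v) (padd o (rot (s * (2 * th)) v)) (padd o (rot (s * (2 * tau)) v)).
Proof.
  intros Hs Hth Htau.
  assert (Sth : 0 < sin th) by (apply sin_gt_0; lra).
  assert (Cth : 0 < cos th) by (apply cos_gt_0; lra).
  assert (Sta : 0 <= sin tau) by (apply sin_ge_0; lra).
  assert (Sd : 0 <= sin th * cos tau - cos th * sin tau) by (rewrite <- sin_minus; apply sin_ge_0; lra).
  pose proof (sin2_cos2 th) as SC. unfold Rsqr in SC.
  unfold cone. rewrite !rot_sign_mul by auto. rewrite !cos_2a_sin, !sin_2a.
  destruct o as [o1 o2], v as [v1 v2]. pt_simpl.
  set (S := sin tau) in *. set (C := cos tau) in *. set (St := sin th) in *. set (Ct := cos th) in *.
  set (N := v1*v1+v2*v2). assert (HN : 0 <= N) by (unfold N; nra).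
  match goal with |- Rabs ?X <= _ * ?D =>
    replace X with (- s * (4 * St * S * N * (St * C - Ct * S)))
      by (unfold N; destruct Hs as [-> | ->]; ring);
    replace D with (4 * St * S * N * (St * S + Ct * C)) by (unfold N; destruct Hs as [-> | ->]; ring) end.
  assert (0 <= 4 * St * S * N) by (apply Rmult_le_pos; [nra|lra]).
  rewrite Rabs_mult, (Rabs_right (_ * _)) by nra.
  replace (Rabs (- s)) with 1 by (destruct Hs as [-> | ->]; [rewrite Rabs_left | rewrite Rabs_right]; lra).
  apply Rmult_le_reg_l with Ct; [lra|].
  replace (Ct * (St / Ct * (4 * St * S * N * (St * S + Ct * C))))
    with (St * (4 * St * S * N * (St * S + Ct * C))) by (field; lra).
  assert (St * (4 * St * S * N * (St * S + Ct * C)) - Ct * (1 * (4 * St * S * N * (St * C - Ct * S)))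
    = 4 * St * S * N * S)
    by (transitivity (4 * St * S * N * S * (St * St + Ct * Ct)); [ring | rewrite SC; ring]).
  nra.
Qed.

Lemma arc_in_diamond (o v : pt) (s th t : R) : (s = 1 \/ s = -1) -> 0 < th < PI / 2 -> 0 <= t <= 2 * th ->
  diamond (sin th / cos th) (padd o v) (padd o (rot (s * (2 * th)) v)) (padd o (rot (s * t) v)).
Proof.
  intros Hs Hth Ht. split.
  - replace t with (2 * (t / 2)) by field. apply arc_in_cone; auto; lra.
  - (* read backwards from its far end, the arc is an arc of the opposite orientation *)
    set (w := rot (s * (2 * th)) v).
    assert (Hw : forall t', rot (s * t') v = rot (- s * (2 * (th - t' / 2))) w).
    { intros t'. unfold w. rewrite rot_rot. f_equal. field. }
    replace (padd o v) with (padd o (rot (s * 0) v)) by (rewrite Rmult_0_r, rot_0; auto).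
    rewrite (Hw 0), (Hw t). fold w.
    replace (rot (- s * (2 * (th - 0 / 2))) w) with (rot (- s * (2 * th)) w) by (f_equal; field).
    apply (arc_in_cone o w (- s) th); [apply sign_opp; auto | auto | lra].
Qed.

Lemma arc_center_eq a c o s th : (s = 1 \/ s = -1) -> 0 < th < PI ->
  c = padd o (rot (s * (2 * th)) (psub a o)) -> o = bisector_pt a c (s * (cos th / (2 * sin th))).
Proof.
  intros Hs Hth ->.
  assert (Sth : 0 < sin th) by (apply sin_gt_0; lra).
  pose proof (sin2_cos2 th) as SC. unfold Rsqr in SC.
  unfold bisector_pt. rewrite rot_sign_mul, cos_2a_sin, sin_2a by auto.
  set (St := sin th) in *. set (Ct := cos th) in *. clearbody St Ct.
  destruct o as [o1 o2], a as [a1 a2]. pt_simpl. f_equal.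
  - replace o1 with (o1 - (a1 - o1) * (St * St + Ct * Ct - 1)) at 1 by (rewrite SC; ring).
    destruct Hs as [-> | ->]; field; lra.
  - replace o2 with (o2 - (a2 - o2) * (St * St + Ct * Ct - 1)) at 1 by (rewrite SC; ring).
    destruct Hs as [-> | ->]; field; lra.
Qed.

Lemma arc_center_spec a c s th : (s = 1 \/ s = -1) -> 0 < th < PI ->
  let o := bisector_pt a c (s * (cos th / (2 * sin th))) in
  c = padd o (rot (s * (2 * th)) (psub a o)).
Proof.
  intros Hs Hth o.
  assert (Sth : 0 < sin th) by (apply sin_gt_0; lra).
  pose proof (sin2_cos2 th) as SC. unfold Rsqr in SC.
  unfold o, bisector_pt. rewrite rot_sign_mul, cos_2a_sin, sin_2a by auto.
  set (St := sin th) in *. set (Ct := cos th) in *. clearbody St Ct.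
  destruct a as [a1 a2], c as [c1 c2]. pt_simpl.
  f_equal; field_simplify_eq; try lra; destruct Hs as [-> | ->];
    replace (St ^ 3) with (St - St * Ct ^ 2) by (simpl; nra); ring.
Qed.

Lemma chord_inside_circle (o v w : pt) (mu : R) :
  padd o v <> padd o w -> sqnorm w = sqnorm v -> 0 < mu < 1 ->
  sqnorm (psub (padd (padd o v) (pscale mu (psub (padd o w) (padd o v)))) o) < sqnorm v.
Proof.
  intros Hne Hw Hmu.
  assert (Hvw : 0 < sqnorm (psub w v)).
  { apply sqnorm_sub_pos. intros ->. auto. }
  assert (E : sqnorm v - sqnorm (psub (padd (padd o v) (pscale mu (psub (padd o w) (padd o v)))) o)
     = mu * (1 - mu) * sqnorm (psub w v)).
  { revert Hw. destruct w as [w1 w2], v as [v1 v2], o as [o1 o2]. unfold sqnorm. pt_simpl. intros Hw. nra. }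
  assert (0 < mu * (1 - mu) * sqnorm (psub w v)) by (apply Rmult_lt_0_compat; nra).
  lra.
Qed.

Lemma arc_side o v s th t : (s = 1 \/ s = -1) -> 0 < th < PI / 2 -> 0 <= t <= 2 * th -> 0 < sqnorm v ->
  let a := padd o v in let c := padd o (rot (s * (2 * th)) v) in let x := padd o (rot (s * t) v) in
  0 <= - s * cross (psub c a) (psub x a) /\ (cross (psub c a) (psub x a) = 0 -> x = a \/ x = c).
Proof.
  intros Hs Hth Ht HN a c x.
  assert (F : - s * cross (psub c a) (psub x a) = 4 * sin th * sin (t / 2) * sqnorm v * sin (th - t / 2)).
  { unfold a, c, x. replace (s * t) with (s * (2 * (t / 2))) by field.
    rewrite sin_minus, !rot_sign_mul, !cos_2a_sin, !sin_2a by auto.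
    unfold sqnorm. destruct o, v. pt_simpl. destruct Hs as [-> | ->]; ring. }
  assert (Sth : 0 < sin th) by (apply sin_gt_0; lra).
  assert (S1 : 0 <= sin (t / 2)) by (apply sin_ge_0; lra).
  assert (S2 : 0 <= sin (th - t / 2)) by (apply sin_ge_0; lra).
  split; [rewrite F; repeat apply Rmult_le_pos; lra|].
  intros Z. rewrite Z, Rmult_0_r in F.
  destruct (Req_dec t 0) as [-> | Ht0]; [left; unfold x, a; rewrite Rmult_0_r, rot_0; auto|].
  destruct (Req_dec t (2 * th)) as [-> | Ht1]; [right; auto|].
  exfalso.
  assert (0 < sin (t / 2)) by (apply sin_gt_0; lra).
  assert (0 < sin (th - t / 2)) by (apply sin_gt_0; lra).
  assert (0 < 4 * sin th * sin (t / 2) * sqnorm v * sin (th - t / 2))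
    by (repeat apply Rmult_lt_0_compat; lra).
  lra.
Qed.

Lemma coords_nonneg_on_circle (A B C2 : R) : 0 <= C2 < 1 -> 1 <= A + B ->
  A * A + B * B + 2 * A * B * C2 = 1 -> 0 <= A /\ 0 <= B.
Proof.
  intros HC HAB HN.
  assert (H : forall P Q, 1 <= P + Q -> P * P + Q * Q + 2 * P * Q * C2 = 1 -> 0 <= Q).
  { intros P Q H1 H2. destruct (Rle_dec 0 Q) as [|h]; auto. exfalso. apply Rnot_le_lt in h.
    assert (1 < P) by lra. assert (P * Q < 0) by nra.
    (* then [1 <= (P + Q)^2 = 1 + 2 P Q (1 - C2) < 1] *)
    assert (2 * P * Q * (1 - C2) < 0) by nra. nra. }
  split; [apply (H B A) | apply (H A B)]; lra.
Qed.

Lemma rot_interpolate v s th t : (s = 1 \/ s = -1) ->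
  pscale (sin (2 * th)) (rot (s * t) v) =
  padd (pscale (sin (2 * th - t)) v) (pscale (sin t) (rot (s * (2 * th)) v)).
Proof.
  intros Hs. rewrite !rot_sign_mul, sin_minus by auto.
  destruct v; unfold pscale, padd; cbn [fst snd]. f_equal; ring.
Qed.

Lemma sqnorm_rot_comb v s th A B : (s = 1 \/ s = -1) ->
  sqnorm (padd (pscale A v) (pscale B (rot (s * (2 * th)) v))) =
  (A * A + B * B + 2 * A * B * cos (2 * th)) * sqnorm v.
Proof.
  intros Hs. rewrite rot_sign_mul by auto. pose proof (sin2_cos2 (2 * th)) as SC. unfold Rsqr in SC.
  unfold sqnorm. destruct v as [v1 v2]. pt_simpl.
  transitivity ((A * A + B * B * (sin (2 * th) * sin (2 * th) + cos (2 * th) * cos (2 * th)) * (s * s)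
    + 2 * A * B * cos (2 * th)) * (v1 * v1 + v2 * v2)
    + B * B * cos (2 * th) * cos (2 * th) * (1 - s * s) * (v1 * v1 + v2 * v2)).
  - ring.
  - rewrite SC. destruct Hs as [-> | ->]; ring.
Qed.

Lemma dot_rot_nonneg_comb v s th t A B : (s = 1 \/ s = -1) -> 0 < th < PI / 4 -> 0 <= t <= 2 * th ->
  0 <= A -> 0 <= B -> 0 <= dot (rot (s * t) v) (padd (pscale A v) (pscale B (rot (s * (2 * th)) v))).
Proof.
  intros Hs Hth Ht HA HB.
  assert (S2 : 0 < sin (2 * th)) by (apply sin_gt_0; lra).
  assert (C2 : 0 <= cos (2 * th)) by (apply cos_ge_0; lra).
  assert (0 <= sin (2 * th - t)) by (apply sin_ge_0; lra).
  assert (0 <= sin t) by (apply sin_ge_0; lra).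
  pose proof (sqnorm_nonneg v) as HN.
  (* [rot (s t) v] is a nonnegative combination of [v] and [rot (s 2 th) v] *)
  apply (Rmult_le_reg_l (sin (2 * th))); auto. rewrite Rmult_0_r.
  replace (sin (2 * th) * dot (rot (s * t) v) _) with (dot (pscale (sin (2 * th)) (rot (s * t) v))
    (padd (pscale A v) (pscale B (rot (s * (2 * th)) v)))) by (unfold dot, pscale; cbn [fst snd]; ring).
  rewrite rot_interpolate by auto.
  set (w := rot (s * (2 * th)) v).
  assert (Nw : sqnorm w = sqnorm v) by apply sqnorm_rot.
  assert (Dvw : dot v w = cos (2 * th) * sqnorm v).
  { unfold w, sqnorm. rewrite rot_sign_mul by auto. destruct v; pt_simpl. ring. }
  replace (dot _ _) with (sin (2 * th - t) * (A * sqnorm v + B * dot v w)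
    + sin t * (A * dot v w + B * sqnorm w)) by (unfold sqnorm, dot, padd, pscale; cbn [fst snd]; ring).
  rewrite Dvw, Nw.
  apply Rplus_le_le_0_compat; apply Rmult_le_pos; auto; apply Rplus_le_le_0_compat; apply Rmult_le_pos; nra.
Qed.

Lemma arc_of_nonneg_coords (v q : pt) (s th A B : R) :
  (s = 1 \/ s = -1) -> 0 < th < PI / 4 -> 0 < sqnorm v -> sqnorm q = sqnorm v -> 0 <= A -> 0 <= B ->
  q = padd (pscale A v) (pscale B (rot (s * (2 * th)) v)) ->
  exists t, 0 <= t <= 2 * th /\ q = rot (s * t) v.
Proof.
  intros Hs Hth HN Hq HA HB Eq.
  assert (S2 : 0 < sin (2 * th)) by (apply sin_gt_0; lra).
  assert (Hunit : A * A + B * B + 2 * A * B * cos (2 * th) = 1).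
  { rewrite Eq, sqnorm_rot_comb in Hq by auto. apply (Rmult_eq_reg_l (sqnorm v)); lra. }
  set (w := rot (s * (2 * th)) v) in *.
  destruct (Req_dec B 0) as [B0 | B0].
  { exists 0. split; [lra|]. rewrite Rmult_0_r, rot_0, Eq, B0.
    assert (A = 1) by (rewrite B0 in Hunit; nra). subst A. destruct v, w; pt_simpl; f_equal; ring. }
  destruct (Req_dec A 0) as [A0 | A0].
  { exists (2 * th). split; [lra|]. fold w. rewrite Eq, A0.
    assert (B = 1) by (rewrite A0 in Hunit; nra). subst B. destruct v, w; pt_simpl; f_equal; ring. }
  (* [s * cross (rot (s t) v) q] goes from [B sin(2 th) |v|^2] at [t = 0] to [- A sin(2 th) |v|^2] *)
  assert (Xvw : cross v w = s * sin (2 * th) * sqnorm v).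
  { unfold w, sqnorm. rewrite rot_sign_mul by auto. destruct v; pt_simpl. ring. }
  assert (Xq : forall z, cross z q = A * cross z v + B * cross z w)
    by (intros; rewrite Eq; destruct z, v, w; pt_simpl; ring).
  assert (Hs2 : s * s = 1) by (destruct Hs as [-> | ->]; ring).
  destruct (IVT_interv (fun t => - (s * cross (rot (s * t) v) q)) 0 (2 * th)) as [t [Ht Hft]].
  - intros t _. unfold rot, cross; cbn [fst snd]. reg.
  - lra.
  - rewrite Rmult_0_r, rot_0, Xq, Xvw. replace (cross v v) with 0 by (unfold cross; ring).
    assert (0 < B * sin (2 * th) * sqnorm v) by (repeat apply Rmult_lt_0_compat; lra). nra.
  - fold w. rewrite Xq. replace (cross w v) with (- cross v w) by (unfold cross; ring).
    rewrite Xvw. replace (cross w w) with 0 by (unfold cross; ring).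
    assert (0 < A * sin (2 * th) * sqnorm v) by (repeat apply Rmult_lt_0_compat; lra). nra.
  - exists t. split; [lra|].
    apply parallel_same_length_eq; rewrite ?sqnorm_rot; auto.
    + destruct (Rmult_integral s (cross (rot (s * t) v) q)); [lra | destruct Hs; lra | auto].
    + rewrite Eq. apply dot_rot_nonneg_comb; auto; lra.
Qed.

Lemma arc_converse (o v x : pt) (s th : R) :
  (s = 1 \/ s = -1) -> 0 < th < PI / 4 -> 0 < sqnorm v -> sqnorm (psub x o) = sqnorm v ->
  0 <= - s * cross (psub (padd o (rot (s * (2 * th)) v)) (padd o v)) (psub x (padd o v)) ->
  exists t, 0 <= t <= 2 * th /\ x = padd o (rot (s * t) v).
Proof.
  intros Hs Hth HN Hq Hside.
  assert (S2 : 0 < sin (2 * th)) by (apply sin_gt_0; lra).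
  assert (C2 : 0 <= cos (2 * th) < 1).
  { split; [apply cos_ge_0; lra|]. pose proof (sin2_cos2 (2 * th)) as SC. unfold Rsqr in SC.
    pose proof (COS_bound (2 * th)) as [_ Hc]. destruct Hc as [|Hc]; [auto | rewrite Hc in SC; nra]. }
  set (w := rot (s * (2 * th)) v) in *. set (q := psub x o) in *.
  set (X := cross v w).
  assert (EX : X = s * sin (2 * th) * sqnorm v).
  { unfold X, w, sqnorm. rewrite rot_sign_mul by auto. destruct v; pt_simpl. ring. }
  assert (HX : X <> 0) by (rewrite EX; destruct Hs as [-> | ->]; nra).
  set (A := cross q w / X). set (B := cross v q / X).
  assert (Eq : q = padd (pscale A v) (pscale B w)).
  { unfold A, B, X in *. destruct q, v, w. pt_simpl. f_equal; field; auto. }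
  assert (Hsum : 1 <= A + B).
  { assert (E : cross (psub (padd o w) (padd o v)) (psub x (padd o v)) = X * (1 - A - B)).
    { replace x with (padd o q) by (unfold q; apply padd_psub).
      unfold A, B. unfold X in *. destruct q, v, w, o. pt_simpl. field; auto. }
    rewrite E, EX in Hside.
    replace (- s * (s * sin (2 * th) * sqnorm v * (1 - A - B)))
      with ((s * s) * (sin (2 * th) * sqnorm v) * (A + B - 1)) in Hside by ring.
    replace (s * s) with 1 in Hside by (destruct Hs as [-> | ->]; ring).
    assert (0 < sin (2 * th) * sqnorm v) by (apply Rmult_lt_0_compat; auto). nra. }
  assert (Hunit : A * A + B * B + 2 * A * B * cos (2 * th) = 1).
  { rewrite Eq in Hq. unfold w in Hq. rewrite sqnorm_rot_comb in Hq by auto.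
    apply (Rmult_eq_reg_l (sqnorm v)); lra. }
  destruct (coords_nonneg_on_circle A B (cos (2 * th)) C2 Hsum Hunit) as [HA HB].
  destruct (arc_of_nonneg_coords v q s th A B Hs Hth HN Hq HA HB Eq) as [t [Ht Et]].
  exists t. split; auto. rewrite <- Et. unfold q. symmetry. apply padd_psub.
Qed.

Lemma arc_disk_in_diamond (a c o x : pt) (s th : R) : (s = 1 \/ s = -1) -> 0 < th < PI / 2 ->
  c = padd o (rot (s * (2 * th)) (psub a o)) ->
  sqnorm (psub x o) <= sqnorm (psub a o) -> 0 <= - s * cross (psub c a) (psub x a) ->
  diamond (sin th / cos th) a c x.
Proof.
  intros Hs Hth Hc Hx Hside.
  assert (Sth : 0 < sin th) by (apply sin_gt_0; lra).
  assert (Cth : 0 < cos th) by (apply cos_gt_0; lra).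
  assert (Hr : 0 < cos th / (2 * sin th)) by (apply Rdiv_lt_0_compat; lra).
  set (lam := s * (cos th / (2 * sin th))).
  assert (Ho : o = bisector_pt a c lam) by (apply (arc_center_eq a c o s th); auto; lra).
  assert (Hlam : lam <> 0) by (unfold lam; destruct Hs as [-> | ->]; nra).
  assert (Hk : sin th / cos th = / (2 * Rabs lam)).
  { unfold lam. rewrite Rabs_mult, (Rabs_right (_ / _)) by lra.
    replace (Rabs s) with 1 by (destruct Hs as [-> | ->]; [rewrite Rabs_R1 | rewrite Rabs_left]; lra).
    field; lra. }
  assert (Hlside : lam * cross (psub c a) (psub x a) <= 0).
  { unfold lam. replace (s * (cos th / (2 * sin th)) * cross (psub c a) (psub x a))
      with (- (cos th / (2 * sin th)) * (- s * cross (psub c a) (psub x a))) by ring. nra. }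
  rewrite Hk. split.
  - apply disk_side_in_cone; auto. rewrite <- Ho. auto.
  - rewrite <- Rabs_Ropp. apply disk_side_in_cone.
    + lra.
    + rewrite bisector_pt_sym, Ropp_involutive, <- Ho. rewrite Hc at 1.
      replace (psub (padd o (rot (s * (2 * th)) (psub a o))) o) with (rot (s * (2 * th)) (psub a o))
        by (destruct o, (rot _ _); unfold padd, psub; cbn [fst snd]; f_equal; ring).
      rewrite sqnorm_rot. auto.
    + rewrite cross_swap_ends. lra.
Qed.

Lemma arc_lens alpha e : 0 < PI - alpha < PI / 4 -> arc_edge alpha e ->
  lens (sin (PI - alpha) / cos (PI - alpha)) (e_src e) (e_dst e) (e_curve e).
Proof.
  destruct e as [a c C]. intros Hth [Hne [o [s [Hs [Hc Hcur]]]]]. cbn [e_src e_dst e_curve] in *.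
  set (th := PI - alpha) in *.
  set (v := psub a o) in *.
  assert (Ea : a = padd o v) by (unfold v; rewrite padd_psub; auto).
  assert (HN : 0 < sqnorm v).
  { pose proof (sqnorm_nonneg v). destruct (Req_dec (sqnorm v) 0) as [E|]; [|lra].
    exfalso. apply Hne. apply sqnorm_eq0 in E. rewrite Hc, Ea, E.
    unfold rot; cbn [fst snd]. f_equal. f_equal; ring. }
  constructor.
  - intros x Hx. apply Hcur in Hx as [t [Ht ->]]. rewrite Hc, Ea at 1. apply arc_in_diamond; auto; lra.
  - exists (fun r => fst (padd o (rot (s * (2 * th * r)) v))),
      (fun r => snd (padd o (rot (s * (2 * th * r)) v))).
    split; [|split; [|split; [|split]]].
    + intros r. unfold padd, rot. cbn [fst snd]. reg.
    + intros r. unfold padd, rot. cbn [fst snd]. reg.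
    + rewrite <- surjective_pairing, !Rmult_0_r, rot_0. auto.
    + rewrite <- surjective_pairing, Rmult_1_r. auto.
    + intros r Hr. rewrite <- surjective_pairing. apply Hcur. exists (2 * th * r). split; [nra | auto].
  - exists (fun x => sqnorm v - sqnorm (psub x o)), (- s). split; [|split; [|split; [|split]]].
    + apply sign_opp; auto.
    + intros fx fy r Hx Hy. unfold sqnorm, dot, psub. cbn [fst snd]. reg.
    + intros mu Hmu.
      pose proof (chord_inside_circle o v (rot (s * (2 * th)) v) mu) as Hin.
      rewrite <- Ea, <- Hc in Hin. specialize (Hin Hne (sqnorm_rot _ _) Hmu). lra.
    + intros x HG Hside. apply (arc_disk_in_diamond a c o x s th); auto; [lra | fold v; lra].
    + intros x HG Hside. apply Hcur.
      apply (arc_converse o v x s th); auto; [lra | rewrite <- Ea, <- Hc; lra].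
Qed.

Lemma arc_midpoint a c o s th : (s = 1 \/ s = -1) -> 0 < th < PI / 2 ->
  c = padd o (rot (s * (2 * th)) (psub a o)) ->
  padd o (rot (s * th) (psub a o)) = bisector_pt a c (- s * (sin th / (2 * (1 + cos th)))).
Proof.
  intros Hs Hth Hc.
  assert (Ho := arc_center_eq a c o s th Hs ltac:(lra) Hc).
  assert (Sth : 0 < sin th) by (apply sin_gt_0; lra).
  assert (Cth : 0 < cos th) by (apply cos_gt_0; lra).
  pose proof (sin2_cos2 th) as SC. unfold Rsqr in SC.
  rewrite Ho. unfold bisector_pt. rewrite rot_sign_mul by auto.
  set (St := sin th) in *. set (Ct := cos th) in *. clearbody St Ct.
  destruct a as [a1 a2], c as [c1 c2]. pt_simpl.
  destruct Hs as [-> | ->]; f_equal; field_simplify_eq; try lra;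
    replace (Ct ^ 3) with (Ct - Ct * St ^ 2) by (simpl; nra); ring.
Qed.

(* Height of the midpoint of an [alpha]-arc above its chord, in units of the chord length;
   the bends are built with their apex at the same point. *)
Definition arc_height (alpha : R) : R := sin (PI - alpha) / (2 * (1 + cos (PI - alpha))).

Lemma arc_midpoint_on_curve alpha e : 0 < PI - alpha < PI / 2 -> arc_edge alpha e ->
  exists sg, (sg = 1 \/ sg = -1) /\ e_curve e (bisector_pt (e_src e) (e_dst e) (sg * arc_height alpha)).
Proof.
  intros Hth [Hne [o [s [Hs [Hdst Hcur]]]]]. exists (- s). split; [apply sign_opp; auto|].
  unfold arc_height. rewrite <- (arc_midpoint (e_src e) (e_dst e) o s (PI - alpha)); auto.
  apply Hcur. exists (PI - alpha). split; [lra | auto].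
Qed.

(** * Bend edges *)

Definition polyline (a m c : pt) (x : pt) : Prop := seg a m x \/ seg m c x.

Lemma polyline_in_diamond k a m c : 0 <= k -> diamond k a c m ->
  forall x, polyline a m c x -> diamond k a c x.
Proof.
  intros Hk [Hma Hmc] x [Hx | Hx]; split.
  - apply (cone_seg k a c a m); auto using cone_apex.
  - apply (cone_seg k c a a m); auto using cone_target.
  - apply (cone_seg k a c m c); auto using cone_target.
  - apply (cone_seg k c a m c); auto using cone_apex.
Qed.

Lemma polyline_path a m c : path_in (polyline a m c) a c.
Proof.
  exists (fun r => fst a + Rmin (2 * r) 1 * (fst m - fst a) + Rmax (2 * r - 1) 0 * (fst c - fst m)),
         (fun r => snd a + Rmin (2 * r) 1 * (snd m - snd a) + Rmax (2 * r - 1) 0 * (snd c - snd m)).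
  assert (Cmin : forall s, continuity_pt (fun r => Rmin (2 * r) 1) s)
    by (intros; apply continuity_pt_Rmin; reg).
  assert (Cmax : forall s, continuity_pt (fun r => Rmax (2 * r - 1) 0) s)
    by (intros; apply continuity_pt_Rmax; reg).
  assert (Clin : forall (f g : R -> R) p u w s, continuity_pt f s -> continuity_pt g s ->
    continuity_pt (fun r => p + f r * u + g r * w) s) by (intros; reg).
  split; [|split; [|split; [|split]]].
  - intros s. apply Clin; auto.
  - intros s. apply Clin; auto.
  - rewrite Rmin_left, Rmax_right by lra. destruct a; cbn [fst snd]; f_equal; ring.
  - rewrite Rmin_right, Rmax_left by lra. destruct c, m; cbn [fst snd]; f_equal; ring.
  - intros r Hr. destruct (Rle_dec r (1 / 2)).
    + left. rewrite Rmin_left, Rmax_right by lra. exists (2 * r). split; [lra|].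
      destruct a, m; pt_simpl; f_equal; ring.
    + right. rewrite Rmin_right, Rmax_left by lra. exists (2 * r - 1). split; [lra|].
      destruct a, m, c; pt_simpl; f_equal; ring.
Qed.

Lemma triangle_barycentric a c m x : cross (psub c a) (psub m a) <> 0 ->
  let O := cross (psub c a) (psub m a) in
  let l1 := cross (psub m c) (psub x c) / O in let l2 := cross (psub a m) (psub x m) / O in
  let l0 := cross (psub c a) (psub x a) / O in
  x = comb3 l1 l2 l0 a c m /\ l1 + l2 + l0 = 1.
Proof.
  intros HO O l1 l2 l0. unfold l1, l2, l0, O in *. unfold comb3.
  destruct a as [a1 a2], c as [c1 c2], m as [m1 m2], x as [x1 x2]. pt_simpl.
  split; [f_equal |]; field; auto.
Qed.

Lemma comb3_on_polyline a c m l1 l2 l0 : 0 <= l1 -> 0 <= l2 -> 0 <= l0 -> l1 + l2 + l0 = 1 ->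
  l1 = 0 \/ l2 = 0 -> polyline a m c (comb3 l1 l2 l0 a c m).
Proof.
  intros H1 H2 H0 Hs [-> | ->].
  - right. exists l2. split; [lra|]. replace l0 with (1 - l2) by lra.
    unfold comb3; destruct a, c, m; pt_simpl; f_equal; ring.
  - left. exists l0. split; [lra|]. replace l1 with (1 - l0) by lra.
    unfold comb3; destruct a, c, m; pt_simpl; f_equal; ring.
Qed.

(* The barrier is the smaller of the two barycentric coordinates attached to [a] and [c]. *)
Lemma polyline_barrier k a m c : ~ collinear a m c -> 0 <= k -> diamond k a c m ->
  exists G eps, lens_barrier k a c (polyline a m c) G eps.
Proof.
  intros Hncol Hk [Hma Hmc].
  set (O := cross (psub c a) (psub m a)).
  assert (HO : O <> 0).
  { intros E; apply Hncol; unfold collinear.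
    replace (cross (psub m a) (psub c a)) with (- O) by (unfold O; destruct a, m, c; pt_simpl; ring). lra. }
  set (eps := if Rlt_dec 0 O then 1 else -1).
  assert (Heps : eps = 1 \/ eps = -1) by (unfold eps; destruct Rlt_dec; auto).
  assert (HeO : 0 < eps * O) by (unfold eps; destruct Rlt_dec; [lra | destruct (Rtotal_order O 0); lra]).
  assert (Hcoef : forall y, 0 <= eps * y -> 0 <= y / O).
  { intros y Hy. replace (y / O) with ((eps * y) / (eps * O)) by (field; destruct Heps; subst; lra).
    apply Rmult_le_pos; [auto | apply Rlt_le, Rinv_0_lt_compat; auto]. }
  assert (Hz : forall y, eps * y = 0 -> y / O = 0)
    by (intros y Hy; replace y with 0
      by (destruct Heps as [E | E]; rewrite E in Hy; lra); unfold Rdiv; ring).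
  exists (fun x => Rmin (eps * cross (psub m c) (psub x c)) (eps * cross (psub a m) (psub x m))), eps.
  split; [auto | split; [| split; [| split]]].
  - intros fx fy r Hx Hy. apply continuity_pt_Rmin; destruct m, c, a; pt_simpl; reg.
  - intros mu Hmu.
    replace (eps * cross (psub m c) (psub (padd a (pscale mu (psub c a))) c)) with ((1 - mu) * (eps * O))
      by (unfold O; destruct a, c, m; pt_simpl; ring).
    replace (eps * cross (psub a m) (psub (padd a (pscale mu (psub c a))) m)) with (mu * (eps * O))
      by (unfold O; destruct a, c, m; pt_simpl; ring).
    apply Rmin_case; apply Rmult_lt_0_compat; lra.
  - intros x HG Hl0.
    pose proof (Rmin_l (eps * cross (psub m c) (psub x c)) (eps * cross (psub a m) (psub x m))).
    pose proof (Rmin_r (eps * cross (psub m c) (psub x c)) (eps * cross (psub a m) (psub x m))).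
    destruct (triangle_barycentric a c m x HO) as [Ex Hsum]. rewrite Ex.
    split; apply cone_comb3; auto using cone_apex, cone_target; apply Hcoef; lra.
  - intros x HG Hl0.
    destruct (triangle_barycentric a c m x HO) as [Ex Hsum]. rewrite Ex.
    revert HG. unfold Rmin. destruct Rle_dec; intros HG;
      (apply comb3_on_polyline; [apply Hcoef; lra .. | auto |]); [left | right]; apply Hz; auto.
Qed.

Lemma polyline_lens k a m c : ~ collinear a m c -> 0 <= k -> diamond k a c m ->
  lens k a c (polyline a m c).
Proof.
  intros Hncol Hk Hm. constructor.
  - apply polyline_in_diamond; auto.
  - apply polyline_path.
  - apply polyline_barrier; auto.
Qed.

Lemma lens_ext k a c (C C' : pt -> Prop) : (forall x, C x <-> C' x) -> lens k a c C -> lens k a c C'.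
Proof.
  intros HC [Hin [px [py [Cx [Cy [E0 [E1 Hp]]]]]] [G [eps [He [HG [Hpos [Hd Hb]]]]]]].
  constructor.
  - intros x Hx. apply Hin, HC, Hx.
  - exists px, py. repeat (split; auto). intros s Hs. apply HC, Hp, Hs.
  - exists G, eps. repeat (split; auto). intros x Hx Hs. apply HC, Hb; auto.
Qed.

Lemma pnorm_sq u : pnorm u * pnorm u = sqnorm u.
Proof. unfold pnorm, sqnorm. apply sqrt_sqrt. destruct u; unfold dot; cbn [fst snd]; nra. Qed.

Lemma pnorm_nonneg u : 0 <= pnorm u.
Proof. apply sqrt_pos. Qed.

Lemma dot_of_angle_at a m c : ~ collinear a m c ->
  dot (psub a m) (psub c m) = cos (angle_at a m c) * (pnorm (psub a m) * pnorm (psub c m)).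
Proof.
  intros Hn. destruct (not_collinear_neq a m c Hn) as [Ham [Hcm _]].
  assert (Na : 0 < pnorm (psub a m)) by (unfold pnorm; apply sqrt_lt_R0, sqnorm_sub_pos; auto).
  assert (Nc : 0 < pnorm (psub c m)) by (unfold pnorm; apply sqrt_lt_R0, sqnorm_sub_pos; auto).
  set (N := pnorm (psub a m) * pnorm (psub c m)). assert (HN : 0 < N) by (unfold N; nra).
  set (D := dot (psub a m) (psub c m)).
  assert (CS : D * D <= N * N).
  { replace (N * N) with ((pnorm (psub a m) * pnorm (psub a m)) * (pnorm (psub c m) * pnorm (psub c m)))
      by (unfold N; ring).
    rewrite !pnorm_sq.
    assert (sqnorm (psub a m) * sqnorm (psub c m)
      = D * D + cross (psub a m) (psub c m) * cross (psub a m) (psub c m))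
      by (unfold D, sqnorm; destruct a, m, c; pt_simpl; ring).
    pose proof (Rle_0_sqr (cross (psub a m) (psub c m))). unfold Rsqr in *. lra. }
  assert (Hr : -1 <= D / N <= 1).
  { split; apply Rmult_le_reg_r with N; auto; unfold Rdiv; rewrite Rmult_assoc, Rinv_l by lra; nra. }
  unfold angle_at. fold D N. rewrite cos_acos by auto. field. lra.
Qed.

Lemma apex_in_cone (a c m : pt) (th : R) : 0 < th < PI / 2 ->
  dot (psub a m) (psub c m) = - cos th * (pnorm (psub a m) * pnorm (psub c m)) ->
  cone (sin th / cos th) a c m.
Proof.
  intros Hth HD.
  assert (HS : 0 < sin th) by (apply sin_gt_0; lra). assert (HC : 0 < cos th) by (apply cos_gt_0; lra).
  pose proof (sin2_cos2 th) as SC. unfold Rsqr in SC.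
  set (St := sin th) in *. set (Ct := cos th) in *.
  set (Na := pnorm (psub a m)) in *. set (Nc := pnorm (psub c m)) in *.
  assert (Ha : Na * Na = sqnorm (psub a m)) by apply pnorm_sq.
  assert (Hc : Nc * Nc = sqnorm (psub c m)) by apply pnorm_sq.
  pose proof (pnorm_nonneg (psub a m)) as Na0. pose proof (pnorm_nonneg (psub c m)) as Nc0.
  fold Na Nc in Na0, Nc0.
  set (X := cross (psub c a) (psub m a)).
  assert (EX : X * X = (Na * Nc * St) * (Na * Nc * St)).
  { transitivity (sqnorm (psub a m) * sqnorm (psub c m)
      - dot (psub a m) (psub c m) * dot (psub a m) (psub c m)).
    - unfold X, sqnorm. destruct a, c, m. pt_simpl. ring.
    - rewrite <- Ha, <- Hc, HD. transitivity ((Na * Nc) * (Na * Nc) * (1 - Ct * Ct)); [ring|].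
      rewrite <- SC. ring. }
  assert (AX : Rabs X = Na * Nc * St).
  { rewrite <- (Rabs_right (Na * Nc * St)) by (apply Rle_ge; apply Rmult_le_pos; [nra | lra]).
    apply Rsqr_eq_abs_0. unfold Rsqr. auto. }
  assert (ED : dot (psub c a) (psub m a) = Na * Na + Ct * (Na * Nc)).
  { rewrite Ha. transitivity (sqnorm (psub a m) - dot (psub a m) (psub c m)).
    - unfold sqnorm. destruct a, c, m. pt_simpl. ring.
    - rewrite HD. ring. }
  unfold cone. fold X. rewrite AX, ED. apply Rmult_le_reg_l with Ct; [lra|].
  replace (Ct * (St / Ct * (Na * Na + Ct * (Na * Nc)))) with (St * (Na * Na) + Ct * (St * (Na * Nc)))
    by (field; lra).
  assert (0 <= St * (Na * Na)) by (apply Rmult_le_pos; nra). nra.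
Qed.

Lemma bend_apex_in_diamond alpha e m : 0 < PI - alpha < PI / 2 ->
  ~ collinear (e_src e) m (e_dst e) -> angle_at (e_src e) m (e_dst e) = alpha ->
  diamond (sin (PI - alpha) / cos (PI - alpha)) (e_src e) (e_dst e) m.
Proof.
  intros Hth Hncol Hang.
  pose proof (dot_of_angle_at _ _ _ Hncol) as HD. rewrite Hang in HD.
  replace (cos alpha) with (- cos (PI - alpha)) in HD by (rewrite Rtrigo_facts.cos_pi_minus; ring).
  split; apply apex_in_cone; auto.
  unfold dot in *. lra.
Qed.

Lemma bend_lens alpha e : 0 < PI - alpha < PI / 2 -> bend_edge alpha e ->
  lens (sin (PI - alpha) / cos (PI - alpha)) (e_src e) (e_dst e) (e_curve e).
Proof.
  intros Hth [m [Hncol [Hang Hcur]]].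
  apply (lens_ext _ _ _ (polyline (e_src e) m (e_dst e))).
  { intros x. rewrite Hcur. unfold polyline. tauto. }
  apply polyline_lens; auto.
  - apply Rlt_le, Rdiv_lt_0_compat; [apply sin_gt_0 | apply cos_gt_0]; lra.
  - apply bend_apex_in_diamond; auto.
Qed.

(** * Counting pairwise noncrossing edges *)

Lemma ForallOrdPairs_nth {A} (Rel : A -> A -> Prop) (d : A) (l : list A) :
  (forall x y, Rel x y -> Rel y x) ->
  (forall i j, (i < length l)%nat -> (j < length l)%nat -> i <> j -> Rel (nth i l d) (nth j l d))
  <-> ForallOrdPairs Rel l.
Proof.
  intros Hsym. induction l as [|x l IH]; split.
  - intros; constructor.
  - intros _ i j Hi; simpl in Hi; lia.
  - intros H. constructor.
    + apply Forall_forall. intros y Hy. destruct (In_nth l y d Hy) as [j [Hj <-]].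
      apply (H 0%nat (S j)); simpl; lia.
    + apply IH. intros i j Hi Hj Hij. apply (H (S i) (S j)); simpl; lia.
  - intros Hp. inversion Hp as [|? ? Hx Hl]; subst. rewrite Forall_forall in Hx.
    intros i j Hi Hj Hij. destruct i, j; simpl in *.
    + lia.
    + apply Hx, nth_In. lia.
    + apply Hsym, Hx, nth_In. lia.
    + apply IH; auto; lia.
Qed.

Lemma ForallOrdPairs_impl {A} (R1 R2 : A -> A -> Prop) l : ForallOrdPairs R1 l ->
  (forall x y, In x l -> In y l -> R1 x y -> R2 x y) -> ForallOrdPairs R2 l.
Proof.
  induction 1 as [|x l Hx Hl IH]; intros H; constructor.
  - rewrite Forall_forall in *. intros y Hy; apply H; simpl; auto.
  - apply IH; intros; apply H; simpl; auto.
Qed.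

Lemma ForallOrdPairs_map {A B} (R1 : A -> A -> Prop) (R2 : B -> B -> Prop) (f : A -> B) l :
  ForallOrdPairs R1 l -> (forall x y, In x l -> In y l -> R1 x y -> R2 (f x) (f y)) ->
  ForallOrdPairs R2 (map f l).
Proof.
  induction 1 as [|x l Hx Hl IH]; intros H; simpl; constructor.
  - rewrite Forall_forall in *. intros y Hy. apply in_map_iff in Hy as [z [<- Hz]]. apply H; simpl; auto.
  - apply IH. intros; apply H; simpl; auto.
Qed.

Lemma ForallOrdPairs_app {A} (Rel : A -> A -> Prop) l1 l2 :
  ForallOrdPairs Rel l1 -> ForallOrdPairs Rel l2 ->
  (forall x y, In x l1 -> In y l2 -> Rel x y) -> ForallOrdPairs Rel (l1 ++ l2).
Proof.
  induction 1 as [|x l Hx Hl IH]; intros H2 H; simpl; auto.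
  constructor.
  - rewrite Forall_forall in *. intros y Hy.
    apply in_app_or in Hy as [Hy | Hy]; [auto | apply H; simpl; auto].
  - apply IH; auto. intros; apply H; simpl; auto.
Qed.

Lemma ForallOrdPairs_filter {A} (Rel : A -> A -> Prop) f l :
  ForallOrdPairs Rel l -> ForallOrdPairs Rel (filter f l).
Proof.
  intros H. induction H as [|x l Hx Hl IH]; simpl; [constructor|]. destruct (f x); auto.
  constructor; auto. rewrite Forall_forall in *. intros y Hy. apply filter_In in Hy. apply Hx; tauto.
Qed.

Definition holds (Q : Prop) : bool := if excluded_middle_informative Q then true else false.

Lemma holds_true Q : holds Q = true <-> Q.
Proof. unfold holds; destruct excluded_middle_informative; split; auto; discriminate. Qed.

Lemma classmates_le1 {A} (Rel Eq : A -> A -> Prop) x (l : list A) :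
  Forall (Rel x) l -> ForallOrdPairs Rel l ->
  (forall y z, In y l -> In z l -> Rel x y -> Rel x z -> Rel y z -> Eq x y -> Eq x z -> False) ->
  (length (filter (fun y => holds (Eq x y)) l) <= 1)%nat.
Proof.
  intros Hx Hl Ht. assert (Hf : ForallOrdPairs Rel (filter (fun y => holds (Eq x y)) l))
    by (apply ForallOrdPairs_filter; auto).
  destruct (filter _ l) as [|y [|z r]] eqn:EG; simpl; try lia. exfalso.
  assert (Iy : In y (filter (fun y => holds (Eq x y)) l)) by (rewrite EG; simpl; auto).
  assert (Iz : In z (filter (fun y => holds (Eq x y)) l)) by (rewrite EG; simpl; auto).
  apply filter_In in Iy as [Iy Ey]. apply filter_In in Iz as [Iz Ez]. rewrite holds_true in Ey, Ez.
  inversion Hf as [|? ? Hyz _]. rewrite Forall_forall in Hx, Hyz.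
  apply (Ht y z); auto. apply Hyz. simpl; auto.
Qed.

(* Keep the first element and drop its (at most one) class-mate, then recurse. *)
Lemma pairwise_two_per_class {A} (Rel Eq : A -> A -> Prop) (l : list A) :
  ForallOrdPairs Rel l ->
  (forall x y z, In x l -> In y l -> In z l ->
     Rel x y -> Rel x z -> Rel y z -> Eq x y -> Eq x z -> False) ->
  exists H, incl H l /\ ForallOrdPairs (fun x y => Rel x y /\ ~ Eq x y) H /\ (length l <= 2 * length H)%nat.
Proof.
  remember (length l) as n eqn:En. revert l En.
  induction n as [n IH] using (well_founded_induction Wf_nat.lt_wf). intros l En Hp Ht.
  destruct l as [|x l'].
  - exists nil. split; [intros ? []|]. split; [constructor | simpl in *; lia].
  - inversion Hp as [|? ? Hx Hp']; subst.
    set (rest := filter (fun y => negb (holds (Eq x y))) l').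
    assert (HL : (length (filter (fun y => holds (Eq x y)) l') + length rest = length l')%nat)
      by (apply filter_length).
    assert (H1 := classmates_le1 Rel Eq x l' Hx Hp'
      (fun y z Hy Hz => Ht x y z (or_introl eq_refl) (or_intror Hy) (or_intror Hz))).
    assert (Hrest : forall y, In y rest <-> In y l' /\ ~ Eq x y).
    { intros y. unfold rest. rewrite filter_In, Bool.negb_true_iff. unfold holds.
      destruct excluded_middle_informative; split; intros []; try discriminate; auto; contradiction. }
    destruct (IH (length rest)) with (l := rest) as [H2 [Hinc [Hpw Hlen]]]; auto.
    + simpl. lia.
    + apply ForallOrdPairs_filter; auto.
    + intros a b c Ia Ib Ic. apply Hrest in Ia, Ib, Ic. apply Ht; simpl; tauto.
    + exists (x :: H2). split; [|split].
      * intros y [<- | Hy]; simpl; auto. right. apply Hinc, Hrest in Hy. tauto.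
      * constructor; auto. rewrite Forall_forall in *. intros y Hy. apply Hinc, Hrest in Hy.
        split; [apply Hx|]; tauto.
      * simpl. lia.
Qed.

Definition noncrossing (e f : edge) : Prop :=
  forall x, e_curve e x -> e_curve f x -> is_endpoint e x /\ is_endpoint f x.

Definition compatible (simple : bool) (e f : edge) : Prop :=
  noncrossing e f /\ (simple = true -> ~ same_endpoints e f).

Lemma same_endpoints_sym e f : same_endpoints e f -> same_endpoints f e.
Proof. unfold same_endpoints. intros [[] | []]; [left | right]; split; auto. Qed.

Lemma compatible_sym s e f : compatible s e f -> compatible s f e.
Proof.
  intros [H1 H2]. split.
  - intros x Hx Hy. destruct (H1 x Hy Hx); auto.
  - intros Hs Hsame. apply (H2 Hs), same_endpoints_sym, Hsame.
Qed.

Lemma embedded_graph_iff ok simple P G : embedded_graph ok simple P G <->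
  NoDup P /\ (forall e, In e G -> In (e_src e) P /\ In (e_dst e) P /\ ok e) /\
  (forall e v, In e G -> In v P -> e_curve e v -> is_endpoint e v) /\
  ForallOrdPairs (compatible simple) G.
Proof.
  unfold embedded_graph.
  rewrite <- (ForallOrdPairs_nth (compatible simple) dummy_edge G (compatible_sym simple)).
  unfold compatible, noncrossing. tauto.
Qed.

Lemma seg_from_common_end P p q r x : general_position P -> In p P -> In q P -> In r P ->
  p <> q -> p <> r -> q <> r -> seg p q x -> seg p r x -> x = p.
Proof.
  intros GP Hp Hq Hr H1 H2 H3 [t [Ht Ex]] [t' [Ht' Ey]].
  pose proof (GP p q r Hp Hq Hr H1 H3 H2) as Hc. unfold collinear in Hc.
  destruct (Req_dec t 0) as [-> | Ht0].
  - rewrite Ex. destruct p, q; pt_simpl; f_equal; ring.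
  - exfalso. apply Hc. rewrite Ex in Ey.
    destruct p as [p1 p2], q as [q1 q2], r as [r1 r2]. unfold padd, pscale, psub in Ey.
    cbn [fst snd] in Ey. injection Ey; intros E2 E1. pt_simpl.
    apply (Rmult_eq_reg_l t); auto.
    replace (t * ((q1 - p1) * (r2 - p2) - (q2 - p2) * (r1 - p1)))
      with ((t * (q1 - p1)) * (r2 - p2) - (t * (q2 - p2)) * (r1 - p1)) by ring.
    replace (t * (q1 - p1)) with (t' * (r1 - p1)) by lra.
    replace (t * (q2 - p2)) with (t' * (r2 - p2)) by lra. ring.
Qed.

Lemma segments_meet_at_ends P a c b d : general_position P ->
  In a P -> In c P -> In b P -> In d P -> a <> c -> b <> d ->
  ~ ((a = b /\ c = d) \/ (a = d /\ c = b)) ->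
  ((a <> b /\ a <> d /\ c <> b /\ c <> d) -> forall x, seg a c x -> seg b d x -> False) ->
  forall x, seg a c x -> seg b d x -> (x = a \/ x = c) /\ (x = b \/ x = d).
Proof.
  intros GP Ha Hc Hb Hd Hac Hbd Hns H4 x Hx Hy.
  destruct (classic (a = b)) as [<- | Nab].
  { assert (Hcd : c <> d) by tauto. pose proof (seg_from_common_end P a c d x GP Ha Hc Hd Hac Hbd Hcd Hx Hy).
    subst; auto. }
  destruct (classic (a = d)) as [<- | Nad].
  { assert (Hcb : c <> b) by tauto.
    pose proof (seg_from_common_end P a c b x GP Ha Hc Hb Hac (not_eq_sym Hbd) Hcb Hx (seg_sym _ _ _ Hy)).
    subst; auto. }
  destruct (classic (c = b)) as [<- | Ncb].
  { pose proof (seg_from_common_end P c a d x GP Hc Ha Hd (not_eq_sym Hac) Hbd Nad (seg_sym _ _ _ Hx) Hy).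
    subst; auto. }
  destruct (classic (c = d)) as [<- | Ncd].
  { pose proof (seg_from_common_end P c a b x GP Hc Ha Hb (not_eq_sym Hac) (not_eq_sym Hbd) Nab
      (seg_sym _ _ _ Hx) (seg_sym _ _ _ Hy)). subst; auto. }
  exfalso. apply (H4 (conj Nab (conj Nad (conj Ncb Ncd))) x Hx Hy).
Qed.

Definition no_parallel_triple (ok : edge -> Prop) : Prop :=
  forall e1 e2 e3, ok e1 -> ok e2 -> ok e3 ->
  noncrossing e1 e2 -> noncrossing e1 e3 -> noncrossing e2 e3 ->
  same_endpoints e1 e2 -> same_endpoints e1 e3 -> False.

Definition straighten (e : edge) : edge := mkEdge (e_src e) (e_dst e) (seg (e_src e) (e_dst e)).

Section UpperBound.

Variables (P : list pt) (k : R) (m : nat) (ok : edge -> Prop).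
Hypothesis GP : general_position P.
Hypothesis Hsep : separated P k.
Hypothesis HM : M_is P m.
Hypothesis Hok : forall e, ok e -> e_src e <> e_dst e /\ lens k (e_src e) (e_dst e) (e_curve e).

Lemma straightened_compatible e f : In (e_src e) P -> In (e_dst e) P -> ok e ->
  In (e_src f) P -> In (e_dst f) P -> ok f ->
  noncrossing e f -> ~ same_endpoints e f -> compatible true (straighten e) (straighten f).
Proof.
  intros Ha Hc He Hb Hd Hf HR Hns. destruct (Hok e He) as [Hac Le]. destruct (Hok f Hf) as [Hbd Lf].
  split.
  - intros x Hx Hy. unfold straighten, is_endpoint in *; cbn [e_src e_dst e_curve] in *.
    apply (segments_meet_at_ends P (e_src e) (e_dst e) (e_src f) (e_dst f)); auto.
    intros [N1 [N2 [N3 N4]]] y Hy1 Hy2.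
    destruct (lenses_cross P k GP Hsep (e_src e) (e_dst e) (e_src f) (e_dst f)
      Ha Hc Hb Hd Hac N1 N2 N3 N4 Hbd (ex_intro _ y (conj Hy1 Hy2)) (e_curve e) (e_curve f) Le Lf)
      as [z [Hz1 Hz2]].
    destruct (HR z Hz1 Hz2) as [[E1 | E1] [E2 | E2]]; rewrite E1 in E2; auto.
  - intros _ Hs. apply Hns. exact Hs.
Qed.

Lemma noncrossing_distinct_bound H :
  (forall e, In e H -> In (e_src e) P /\ In (e_dst e) P /\ ok e) ->
  ForallOrdPairs (fun e f => noncrossing e f /\ ~ same_endpoints e f) H ->
  (length H <= m)%nat.
Proof.
  intros HH Hpw. destruct HM as [[G0 [[ND _] _]] Hmax].
  rewrite <- (length_map straighten H). apply Hmax, embedded_graph_iff.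
  split; [auto | split; [|split]].
  - intros e He. apply in_map_iff in He as [f [<- Hf]]. destruct (HH f Hf) as [? [? Hf']].
    split; [auto | split; [auto |]]. split; [apply (proj1 (Hok f Hf')) | intros; cbn; tauto].
  - intros e v He Hv Hc. apply in_map_iff in He as [f [<- Hf]]. destruct (HH f Hf) as [Ha [Hc' Hf']].
    unfold straighten, is_endpoint in *; cbn [e_src e_dst e_curve] in *.
    destruct (classic (v = e_src f)); [left; auto|]. destruct (classic (v = e_dst f)); [right; auto|].
    exfalso. apply (GP (e_src f) (e_dst f) v); auto; [apply (proj1 (Hok f Hf')) | apply seg_cross; auto].
  - apply (ForallOrdPairs_map _ _ straighten H Hpw). intros e f He Hf [HR Hns].
    destruct (HH e He) as [? [? ?]]. destruct (HH f Hf) as [? [? ?]].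
    apply straightened_compatible; auto.
Qed.

Lemma simple_graph_bound G : embedded_graph ok true P G -> (length G <= m)%nat.
Proof.
  intros HG. apply embedded_graph_iff in HG as [_ [Hel [_ Hpw]]].
  apply noncrossing_distinct_bound; auto.
  apply (ForallOrdPairs_impl _ _ _ Hpw). intros x y _ _ [H1 H2]. split; auto.
Qed.

Lemma multigraph_bound G : no_parallel_triple ok -> embedded_graph ok false P G -> (length G <= 2 * m)%nat.
Proof.
  intros Htr HG. apply embedded_graph_iff in HG as [_ [Hel [_ Hpw]]].
  assert (Hpw' : ForallOrdPairs noncrossing G)
    by (apply (ForallOrdPairs_impl _ _ _ Hpw); intros x y _ _ [H1 _]; auto).
  destruct (pairwise_two_per_class noncrossing same_endpoints G Hpw') as [H [Hinc [HpwH Hlen]]].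
  { intros x y z Hx Hy Hz. apply Htr; apply Hel; auto. }
  assert (length H <= m)%nat by (apply noncrossing_distinct_bound; auto).
  lia.
Qed.

End UpperBound.

(** * Parallel edges *)

Lemma no_parallel_triple_of_midpoints (ok : edge -> Prop) (lam : R) : 0 < lam ->
  (forall e, ok e -> e_src e <> e_dst e /\
     exists sg, (sg = 1 \/ sg = -1) /\ e_curve e (bisector_pt (e_src e) (e_dst e) (sg * lam))) ->
  no_parallel_triple ok.
Proof.
  intros Hl Hok e1 e2 e3 O1 O2 O3 R12 R13 R23 S12 S13.
  set (a := e_src e1). set (c := e_dst e1).
  assert (Hne : a <> c) by (apply Hok; auto).
  assert (Mid : forall e, ok e -> same_endpoints e1 e ->
    exists sg, (sg = 1 \/ sg = -1) /\ e_curve e (bisector_pt a c (sg * lam))).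
  { intros e Oe [[E1 E2] | [E1 E2]]; destruct (Hok e Oe) as [_ [sg [Hsg Hc]]].
    - exists sg. unfold a, c. rewrite E1, E2. auto.
    - exists (- sg). split; [apply sign_opp; auto|]. unfold a, c. rewrite E1, E2.
      replace (- sg * lam) with (- (sg * lam)) by ring. rewrite <- bisector_pt_sym. auto. }
  assert (End : forall e, same_endpoints e1 e -> forall sg, (sg = 1 \/ sg = -1) ->
    ~ is_endpoint e (bisector_pt a c (sg * lam))).
  { intros e Se sg Hsg He.
    destruct (bisector_pt_not_end a c (sg * lam) Hne) as [N1 N2]; [destruct Hsg as [-> | ->]; lra|].
    destruct Se as [[E1 E2] | [E1 E2]]; destruct He as [He | He];
      rewrite He in N1, N2; fold a c in E1, E2; congruence. }
  assert (S11 : same_endpoints e1 e1) by (left; auto).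
  destruct (Mid e1 O1 S11) as [s1 [H1 C1]].
  destruct (Mid e2 O2 S12) as [s2 [H2 C2]].
  destruct (Mid e3 O3 S13) as [s3 [H3 C3]].
  (* two of the three signs agree, and those two curves share a point that is not an endpoint *)
  destruct (Req_dec s1 s2) as [<- | E12]; [apply (End e1 S11 s1 H1), (R12 _ C1 C2)|].
  destruct (Req_dec s1 s3) as [<- | E13]; [apply (End e1 S11 s1 H1), (R13 _ C1 C3)|].
  assert (s2 = s3) as <- by (destruct H1, H2, H3; subst; lra).
  apply (End e2 S12 s2 H2), (R23 _ C2 C3).
Qed.

Lemma coords_inj u p q : sqnorm u <> 0 -> dot u p = dot u q -> cross u p = cross u q -> p = q.
Proof.
  intros Hu Hd Hc. destruct u as [u1 u2], p as [p1 p2], q as [q1 q2]. unfold sqnorm in Hu. pt_simpl.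
  assert (E1 : (u1 * u1 + u2 * u2) * p1 = (u1 * u1 + u2 * u2) * q1).
  { replace ((u1 * u1 + u2 * u2) * p1) with (u1 * (u1 * p1 + u2 * p2) - u2 * (u1 * p2 - u2 * p1)) by ring.
    rewrite Hd, Hc. ring. }
  assert (E2 : (u1 * u1 + u2 * u2) * p2 = (u1 * u1 + u2 * u2) * q2).
  { replace ((u1 * u1 + u2 * u2) * p2) with (u2 * (u1 * p1 + u2 * p2) + u1 * (u1 * p2 - u2 * p1)) by ring.
    rewrite Hd, Hc. ring. }
  apply Rmult_eq_reg_l in E1, E2; auto. congruence.
Qed.

Section ApexCircle.

Variables (U h : R).
Hypotheses (HU : 0 < U) (Hh : 0 < h).

Definition on_apex_circle (x y : R) : Prop := x * x - U * x + y * y + h * U * y = 0.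

Lemma apex_circle_same_abscissa x y1 y2 : 0 < y1 -> 0 < y2 ->
  on_apex_circle x y1 -> on_apex_circle x y2 -> y1 = y2.
Proof.
  unfold on_apex_circle. intros Hy1 Hy2 E1 E2.
  assert (H : (y1 - y2) * (y1 + y2 + h * U) = 0) by nra.
  apply Rmult_integral in H. destruct H; [lra | nra].
Qed.

(* Along the upper arc, the direction seen from [(0, 0)] turns clockwise as [x] grows. *)
Lemma apex_circle_turns x1 y1 x2 y2 : 0 < y1 -> 0 < y2 ->
  on_apex_circle x1 y1 -> on_apex_circle x2 y2 -> x1 < x2 -> 0 < x2 * y1 - y2 * x1.
Proof.
  unfold on_apex_circle. intros Hy1 Hy2 E1 E2 Hx.
  assert (F1 : x1 * (U - x1) = y1 * (y1 + h * U)) by lra.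
  assert (F2 : x2 * (U - x2) = y2 * (y2 + h * U)) by lra.
  assert (0 < y1 * (y1 + h * U)) by (apply Rmult_lt_0_compat; nra).
  assert (0 < y2 * (y2 + h * U)) by (apply Rmult_lt_0_compat; nra).
  assert (0 < x1 < U) by (split; nra). assert (0 < x2 < U) by (split; nra).
  destruct (Rlt_dec 0 (x2 * y1 - y2 * x1)) as [|h0]; auto. exfalso. apply Rnot_lt_le in h0.
  assert (y1 < y2) by nra.
  assert (K : x1 * x2 * ((U - x1) * (y2 + h * U) - (U - x2) * (y1 + h * U)) =
              (y1 + h * U) * (y2 + h * U) * (x2 * y1 - x1 * y2)).
  { transitivity (x2 * (x1 * (U - x1)) * (y2 + h * U) - x1 * (x2 * (U - x2)) * (y1 + h * U)); [ring|].
    rewrite F1, F2. ring. }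
  assert (0 < (y1 + h * U) * (y2 + h * U)) by (apply Rmult_lt_0_compat; nra).
  assert (0 < x1 * x2) by nra.
  assert ((U - x1) * (y2 + h * U) - (U - x2) * (y1 + h * U) <= 0) by nra.
  assert ((U - x2) * (y1 + h * U) < (U - x1) * (y2 + h * U)).
  { apply Rle_lt_trans with ((U - x2) * (y2 + h * U)).
    - apply Rmult_le_compat_l; lra.
    - apply Rmult_lt_compat_r; nra. }
  lra.
Qed.

Lemma apex_circle_turns_from_end x1 y1 x2 y2 : 0 < y1 -> 0 < y2 ->
  on_apex_circle x1 y1 -> on_apex_circle x2 y2 -> x1 < x2 -> 0 < (U - x1) * (y2 - y1) + y1 * (x2 - x1).
Proof.
  unfold on_apex_circle. intros Hy1 Hy2 E1 E2 Hx.
  (* the reflection [x |-> U - x] maps the circle to itself *)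
  assert (0 < (U - x1) * y2 - y1 * (U - x2)) by (apply apex_circle_turns; unfold on_apex_circle; nra).
  nra.
Qed.

End ApexCircle.

(* In coordinates [D] along [ac] and [C] across it, the apexes seeing [ac] under the angle
   [PI - th] lie on two circle arcs through [a] and [c]. *)
Lemma apex_on_circle (a c m : pt) (th : R) : 0 < th < PI / 2 -> a <> c ->
  dot (psub a m) (psub c m) = - cos th * (pnorm (psub a m) * pnorm (psub c m)) ->
  let U := sqnorm (psub c a) in let D := dot (psub c a) (psub m a) in
  let C := cross (psub c a) (psub m a) in
  on_apex_circle U (cos th / sin th) D (Rabs C).
Proof.
  intros Hth Hne HD U D C.
  assert (HS : 0 < sin th) by (apply sin_gt_0; lra). assert (HC : 0 < cos th) by (apply cos_gt_0; lra).
  pose proof (sin2_cos2 th) as SC. unfold Rsqr in SC.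
  set (St := sin th) in *. set (Ct := cos th) in *.
  set (Na := pnorm (psub a m)) in *. set (Nc := pnorm (psub c m)) in *.
  assert (Ha : Na * Na = sqnorm (psub a m)) by apply pnorm_sq.
  assert (Hc : Nc * Nc = sqnorm (psub c m)) by apply pnorm_sq.
  pose proof (pnorm_nonneg (psub a m)) as Na0. pose proof (pnorm_nonneg (psub c m)) as Nc0.
  fold Na Nc in Na0, Nc0.
  pose proof (sqnorm_sub_pos c a (not_eq_sym Hne)) as HU. fold U in HU.
  set (E := D * D - U * D + C * C).
  assert (I1 : U * dot (psub a m) (psub c m) = E)
    by (unfold E, U, D, C, sqnorm; destruct a, c, m; pt_simpl; ring).
  assert (I2 : U * U * (sqnorm (psub a m) * sqnorm (psub c m)) = E * E + U * U * (C * C))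
    by (unfold E, U, D, C, sqnorm; destruct a, c, m; pt_simpl; ring).
  assert (EE : E = - Ct * U * (Na * Nc)) by (rewrite <- I1, HD; ring).
  assert (Eneg : E <= 0) by (rewrite EE; assert (0 <= U * (Na * Nc)) by (apply Rmult_le_pos; nra); nra).
  assert (Q : E * E * (St * St) = (Ct * U * Rabs C) * (Ct * U * Rabs C)).
  { assert (E * E = Ct * Ct * (U * U * (sqnorm (psub a m) * sqnorm (psub c m))))
    by (rewrite EE, <- Ha, <- Hc; ring).
    rewrite I2 in H. replace (St * St) with (1 - Ct * Ct) by lra.
    replace ((Ct * U * Rabs C) * (Ct * U * Rabs C)) with (Ct * Ct * (U * U) * (Rabs C * Rabs C)) by ring.
    rewrite <- Rabs_mult, Rabs_right by (apply Rle_ge, Rle_0_sqr). nra. }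
  assert (Hroot : - E * St = Ct * U * Rabs C).
  { assert (0 <= - E * St) by nra.
    assert (0 <= Ct * U * Rabs C) by (apply Rmult_le_pos; [nra | apply Rabs_pos]).
    apply Rsqr_inj; auto. unfold Rsqr. nra. }
  unfold on_apex_circle.
  replace (Rabs C * Rabs C) with (C * C)
    by (rewrite <- Rabs_mult, Rabs_right; [ring | apply Rle_ge, Rle_0_sqr]).
  replace (cos th / sin th * U * Rabs C) with (Ct / St * U * Rabs C) by auto.
  fold E. apply (Rmult_eq_reg_l St); [|lra].
  replace (St * (E + Ct / St * U * Rabs C)) with (E * St + Ct * U * Rabs C) by (field; lra). lra.
Qed.


Lemma upper_apexes_cross a c mA mB (h : R) : 0 < h -> a <> c ->
  let U := sqnorm (psub c a) in
  let DA := dot (psub c a) (psub mA a) in let CA := cross (psub c a) (psub mA a) in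
  let DB := dot (psub c a) (psub mB a) in let CB := cross (psub c a) (psub mB a) in
  0 < CA -> 0 < CB -> on_apex_circle U h DA CA -> on_apex_circle U h DB CB -> DA < DB ->
  exists X, seg a mB X /\ seg mA c X /\ X <> a /\ X <> c.
Proof.
  intros Hh Hne U DA CA DB CB YA YB EA EB Hlt.
  pose proof (sqnorm_sub_pos c a (not_eq_sym Hne)) as HU. fold U in HU.
  pose proof (apex_circle_turns U h HU Hh DA CA DB CB YA YB EA EB Hlt) as P1.
  pose proof (apex_circle_turns_from_end U h HU Hh DA CA DB CB YA YB EA EB Hlt) as P2.
  assert (I1 : U * cross (psub mB a) (psub mA a) = DB * CA - CB * DA)
    by (unfold U, DB, CA, CB, DA, sqnorm; destruct a, c, mA, mB; pt_simpl; ring).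
  assert (I2 : cross (psub mB a) (psub c a) = - CB) by (unfold CB; destruct a, c, mB; pt_simpl; ring).
  assert (I3 : cross (psub c mA) (psub a mA) = - CA) by (unfold CA; destruct a, c, mA; pt_simpl; ring).
  assert (I4 : U * cross (psub c mA) (psub mB mA) = (U - DA) * (CB - CA) + CA * (DB - DA))
    by (unfold U, DB, CA, CB, DA, sqnorm; destruct a, c, mA, mB; pt_simpl; ring).
  destruct (segments_cross a mB mA c) as [t [mu [Ht [Hmu E]]]].
  - apply (Rmult_lt_reg_l U); auto. rewrite Rmult_0_r, <- Rmult_assoc, I1, I2.
    assert (0 < (DB * CA - CB * DA) * CB) by (apply Rmult_lt_0_compat; lra). lra.
  - apply (Rmult_lt_reg_l U); auto. rewrite Rmult_0_r.
    replace (U * (cross (psub c mA) (psub a mA) * cross (psub c mA) (psub mB mA)))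
      with (cross (psub c mA) (psub a mA) * (U * cross (psub c mA) (psub mB mA))) by ring.
    rewrite I3, I4.
    assert (0 < CA * ((U - DA) * (CB - CA) + CA * (DB - DA))) by (apply Rmult_lt_0_compat; lra). lra.
  - set (X := padd a (pscale t (psub mB a))).
    assert (HX1 : seg a mB X) by (exists t; split; [lra | auto]).
    assert (HX2 : seg mA c X) by (unfold X; rewrite E; exists mu; split; [lra | auto]).
    exists X. split; [auto | split; [auto | split]]; intros EX; rewrite EX in *.
    + apply seg_cross in HX2. rewrite cross_swap_ends, cross_swap_ends, I3 in HX2. lra.
    + apply seg_cross in HX1. rewrite I2 in HX1. lra.
Qed.

Lemma same_side_apexes_cross a c mA mB (h : R) : 0 < h -> a <> c ->
  let U := sqnorm (psub c a) in
  let DA := dot (psub c a) (psub mA a) in let CA := cross (psub c a) (psub mA a) in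
  let DB := dot (psub c a) (psub mB a) in let CB := cross (psub c a) (psub mB a) in
  on_apex_circle U h DA (Rabs CA) -> on_apex_circle U h DB (Rabs CB) ->
  0 < CA * CB -> DA < DB ->
  exists X, seg a mB X /\ seg mA c X /\ X <> a /\ X <> c.
Proof.
  intros Hh Hne U DA CA DB CB EA EB Hside Hlt.
  destruct (Rlt_dec 0 CA) as [HA | HA].
  - assert (0 < CB) by nra. rewrite Rabs_right in EA, EB by lra.
    apply (upper_apexes_cross a c mA mB h); auto.
  - (* below the chord: exchange [a] and [c], which reflects the apexes above it *)
    assert (CA < 0) by (destruct (Rtotal_order CA 0) as [|[E|]]; [auto | rewrite E in Hside; lra | lra]).
    assert (CB < 0) by nra. rewrite Rabs_left in EA, EB by lra. unfold on_apex_circle in EA, EB.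
    assert (Hswap : forall m, dot (psub a c) (psub m c) = U - dot (psub c a) (psub m a) /\
      cross (psub a c) (psub m c) = - cross (psub c a) (psub m a)).
    { intros m. unfold U, sqnorm. split; [destruct a, c, m; pt_simpl; ring | apply cross_swap_ends]. }
    assert (HU : sqnorm (psub a c) = U) by (unfold U, sqnorm; destruct a, c; pt_simpl; ring).
    destruct (upper_apexes_cross c a mB mA h Hh (not_eq_sym Hne)) as [X [S1 [S2 [Xc Xa]]]];
      cbv zeta; rewrite ?HU, ?(proj1 (Hswap mA)), ?(proj2 (Hswap mA)),
        ?(proj1 (Hswap mB)), ?(proj2 (Hswap mB));
      fold DA CA DB CB; unfold on_apex_circle; try lra.
    exists X. split; [apply seg_sym | split; [apply seg_sym |]]; auto.
Qed.

Definition bend_apex (th : R) (a c m : pt) (e : edge) : Prop :=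
  (forall x, polyline a m c x -> e_curve e x) /\ ~ collinear a m c /\
  dot (psub a m) (psub c m) = - cos th * (pnorm (psub a m) * pnorm (psub c m)).

Lemma bend_apex_exists alpha e a c : 0 < PI - alpha < PI / 2 -> bend_edge alpha e ->
  ((e_src e = a /\ e_dst e = c) \/ (e_src e = c /\ e_dst e = a)) ->
  exists m, bend_apex (PI - alpha) a c m e.
Proof.
  intros Hth [m [Hn [Ha Hc]]] Hs. exists m.
  pose proof (dot_of_angle_at _ _ _ Hn) as HD. rewrite Ha in HD.
  replace (cos alpha) with (- cos (PI - alpha)) in HD by (rewrite Rtrigo_facts.cos_pi_minus; ring).
  destruct Hs as [[E1 E2] | [E1 E2]]; rewrite E1, E2 in *.
  - split; [intros x Hx; apply Hc; auto | split; auto].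
  - split; [|split].
    + intros x [Hx | Hx]; apply Hc; [right | left]; apply seg_sym; auto.
    + unfold collinear in *. intros H; apply Hn. destruct a, m, c; pt_simpl. lra.
    + unfold dot in *. lra.
Qed.

Lemma same_side_bends_cross th a c m1 m2 e1 e2 : 0 < th < PI / 2 -> a <> c ->
  (forall x, is_endpoint e1 x -> x = a \/ x = c) ->
  bend_apex th a c m1 e1 -> bend_apex th a c m2 e2 ->
  0 < cross (psub c a) (psub m1 a) * cross (psub c a) (psub m2 a) -> ~ noncrossing e1 e2.
Proof.
  intros Hth Hne Hend [Cu1 [N1 D1]] [Cu2 [N2 D2]] Hside HR.
  assert (Hh : 0 < cos th / sin th) by (apply Rdiv_lt_0_compat; [apply cos_gt_0 | apply sin_gt_0]; lra).
  pose proof (apex_on_circle a c m1 th Hth Hne D1) as E1.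
  pose proof (apex_on_circle a c m2 th Hth Hne D2) as E2.
  cbv zeta in E1, E2.
  assert (NotEnd : forall X, X <> a -> X <> c -> e_curve e1 X -> e_curve e2 X -> False).
  { intros X Xa Xc H1 H2. destruct (HR X H1 H2) as [H _]. destruct (Hend X H); auto. }
  destruct (Rtotal_order (dot (psub c a) (psub m1 a)) (dot (psub c a) (psub m2 a))) as [Hlt | [Heq | Hgt]].
  - destruct (same_side_apexes_cross a c m1 m2 _ Hh Hne E1 E2 Hside Hlt) as [X [S2 [S1 [Xa Xc]]]].
    apply (NotEnd X Xa Xc); [apply Cu1; right | apply Cu2; left]; auto.
  - (* equal abscissas force equal apexes, which is a common interior point *)
    assert (Hy : Rabs (cross (psub c a) (psub m1 a)) = Rabs (cross (psub c a) (psub m2 a))).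
    { rewrite Heq in E1.
      apply (apex_circle_same_abscissa _ _ (sqnorm_sub_pos c a (not_eq_sym Hne)) Hh
        (dot (psub c a) (psub m2 a))); auto; apply Rabs_pos_lt; intro Z; rewrite Z in Hside; lra. }
    assert (Ceq : cross (psub c a) (psub m1 a) = cross (psub c a) (psub m2 a)).
    { revert Hy Hside. unfold Rabs. destruct Rcase_abs, Rcase_abs; intros; nra. }
    assert (m1 = m2) as <-.
    { replace m1 with (padd a (psub m1 a)) by apply padd_psub.
      replace m2 with (padd a (psub m2 a)) by apply padd_psub.
      f_equal. apply (coords_inj (psub c a)); auto. pose proof (sqnorm_sub_pos c a (not_eq_sym Hne)). lra. }
    destruct (not_collinear_neq a m1 c N1) as [Ham [Hcm _]].
    apply (NotEnd m1); auto; [apply Cu1 | apply Cu2]; left; apply seg_right.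
  - rewrite Rmult_comm in Hside.
    destruct (same_side_apexes_cross a c m2 m1 _ Hh Hne E2 E1 Hside Hgt) as [X [S2 [S1 [Xa Xc]]]].
    apply (NotEnd X Xa Xc); [apply Cu1; left | apply Cu2; right]; auto.
Qed.

Lemma bend_no_parallel_triple alpha : 0 < PI - alpha < PI / 2 -> no_parallel_triple (bend_edge alpha).
Proof.
  intros Hth e1 e2 e3 B1 B2 B3 R12 R13 R23 S12 S13.
  set (a := e_src e1). set (c := e_dst e1).
  assert (Hne : a <> c) by (destruct B1 as [m [Hn _]]; apply (not_collinear_neq _ m _ Hn)).
  assert (Hends : forall e, same_endpoints e1 e -> forall x, is_endpoint e x -> x = a \/ x = c).
  { intros e [[E1 E2] | [E1 E2]] x [-> | ->]; fold a c in E1, E2; rewrite <- ?E1, <- ?E2; auto. }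
  assert (S11 : same_endpoints e1 e1) by (left; auto).
  assert (Hor : forall e, same_endpoints e1 e ->
    (e_src e = a /\ e_dst e = c) \/ (e_src e = c /\ e_dst e = a))
    by (intros e [[E1 E2] | [E1 E2]]; [left | right]; split; auto).
  destruct (bend_apex_exists alpha e1 a c Hth B1 (Hor e1 S11)) as [m1 D1].
  destruct (bend_apex_exists alpha e2 a c Hth B2 (Hor e2 S12)) as [m2 D2].
  destruct (bend_apex_exists alpha e3 a c Hth B3 (Hor e3 S13)) as [m3 D3].
  assert (NZ : forall m e, bend_apex (PI - alpha) a c m e -> cross (psub c a) (psub m a) <> 0).
  { intros m e [_ [N _]] Z. apply N. unfold collinear. destruct a, c, m; pt_simpl. lra. }
  pose proof (NZ _ _ D1) as Z1. pose proof (NZ _ _ D2) as Z2. pose proof (NZ _ _ D3) as Z3.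
  set (C1 := cross (psub c a) (psub m1 a)) in *. set (C2 := cross (psub c a) (psub m2 a)) in *.
  set (C3 := cross (psub c a) (psub m3 a)) in *.
  (* two of the three apexes lie on the same side of [ac] *)
  destruct (Rlt_dec 0 (C1 * C2)) as [P12 | P12].
  { exact (same_side_bends_cross _ a c m1 m2 e1 e2 Hth Hne (Hends e1 S11) D1 D2 P12 R12). }
  destruct (Rlt_dec 0 (C1 * C3)) as [P13 | P13].
  { exact (same_side_bends_cross _ a c m1 m3 e1 e3 Hth Hne (Hends e1 S11) D1 D3 P13 R13). }
  refine (same_side_bends_cross _ a c m2 m3 e2 e3 Hth Hne (Hends e2 S12) D2 D3 _ R23). change (0 < C2 * C3).
  assert (C1 * C2 < 0) by (assert (C1 * C2 <> 0) by (apply Rmult_integral_contrapositive; auto); lra).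
  assert (C1 * C3 < 0) by (assert (C1 * C3 <> 0) by (apply Rmult_integral_contrapositive; auto); lra).
  assert (0 < C1 * C1) by (apply Rsqr_pos_lt in Z1; unfold Rsqr in Z1; lra).
  apply Rmult_lt_reg_l with (C1 * C1); [lra|].
  rewrite Rmult_0_r. replace (C1 * C1 * (C2 * C3)) with ((- (C1 * C2)) * (- (C1 * C3))) by ring.
  apply Rmult_lt_0_compat; lra.
Qed.

(** * Redrawing plane straight-line graphs *)

Definition drawn_on_side (k sg : R) (e f : edge) : Prop :=
  e_src f = e_src e /\ e_dst f = e_dst e /\
  (forall x, e_curve f x -> diamond k (e_src e) (e_dst e) x) /\
  (forall x, e_curve f x -> 0 <= sg * cross (psub (e_dst e) (e_src e)) (psub x (e_src e)) /\
     (cross (psub (e_dst e) (e_src e)) (psub x (e_src e)) = 0 -> x = e_src e \/ x = e_dst e)).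

Definition arc_on_side (alpha sg : R) (e : edge) : edge :=
  let o := bisector_pt (e_src e) (e_dst e) (- sg * (cos (PI - alpha) / (2 * sin (PI - alpha)))) in
  mkEdge (e_src e) (e_dst e)
    (fun x => exists t, 0 <= t <= 2 * (PI - alpha) /\ x = padd o (rot (- sg * t) (psub (e_src e) o))).

Lemma arc_on_side_spec alpha sg e : 0 < PI - alpha < PI / 2 -> (sg = 1 \/ sg = -1) -> e_src e <> e_dst e ->
  arc_edge alpha (arc_on_side alpha sg e) /\
  drawn_on_side (sin (PI - alpha) / cos (PI - alpha)) sg e (arc_on_side alpha sg e).
Proof.
  intros Hth Hsg Hne. unfold arc_on_side.
  set (a := e_src e) in *. set (c := e_dst e) in *. set (th := PI - alpha) in *.
  set (o := bisector_pt a c (- sg * (cos th / (2 * sin th)))).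
  assert (Hs := sign_opp sg Hsg).
  assert (Hc : c = padd o (rot (- sg * (2 * th)) (psub a o))) by (apply arc_center_spec; auto; lra).
  set (v := psub a o) in *.
  assert (Ea : a = padd o v) by (unfold v; rewrite padd_psub; auto).
  assert (HN : 0 < sqnorm v).
  { pose proof (sqnorm_nonneg v). destruct (Req_dec (sqnorm v) 0) as [E|]; [|lra].
    exfalso. apply Hne. apply sqnorm_eq0 in E. fold a c. rewrite Hc, Ea, E.
    unfold rot; cbn [fst snd]. f_equal. f_equal; ring. }
  split; [split; [auto | exists o, (- sg); split; [auto | split; [auto | intros x; tauto]]]|].
  split; [auto | split; [auto | split]]; cbn [e_curve]; fold a c; intros x [t [Ht ->]].
  - rewrite Hc, Ea at 1. apply arc_in_diamond; auto; lra.
  - pose proof (arc_side o v (- sg) th t Hs Hth Ht HN) as [S1 S2].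
    rewrite <- Ea, <- Hc in S1, S2. split; [lra | auto].
Qed.

Lemma bisector_pt_shape a c lam :
  let m := bisector_pt a c lam in let U := sqnorm (psub c a) in
  sqnorm (psub a m) = U * (/ 4 + lam * lam) /\ sqnorm (psub c m) = U * (/ 4 + lam * lam) /\
  dot (psub a m) (psub c m) = U * (lam * lam - / 4).
Proof.
  intros m U. unfold m, U, bisector_pt, sqnorm. destruct a, c. pt_simpl.
  split; [|split]; field.
Qed.

Lemma angle_at_bend_apex a c sg alpha : 0 < PI - alpha < PI / 2 -> (sg = 1 \/ sg = -1) -> a <> c ->
  angle_at a (bisector_pt a c (sg * arc_height alpha)) c = alpha.
Proof.
  intros Hth Hsg Hne.
  set (th := PI - alpha) in *.
  assert (Sth : 0 < sin th) by (apply sin_gt_0; lra).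
  assert (Cth : 0 < cos th) by (apply cos_gt_0; lra).
  pose proof (sin2_cos2 th) as SC. unfold Rsqr in SC.
  set (lam := sg * arc_height alpha).
  assert (El : lam * lam = (sin th / (2 * (1 + cos th))) ^ 2)
    by (unfold lam, arc_height; fold th; destruct Hsg as [-> | ->]; ring).
  destruct (bisector_pt_shape a c lam) as [N1 [N2 DD]]. cbv zeta in N1, N2, DD.
  pose proof (sqnorm_sub_pos c a (not_eq_sym Hne)) as HU.
  set (U := sqnorm (psub c a)) in *. set (m := bisector_pt a c lam) in *.
  assert (Hl : 0 <= lam * lam) by (pose proof (Rle_0_sqr lam); unfold Rsqr in *; lra).
  assert (PP : pnorm (psub a m) * pnorm (psub c m) = U * (/ 4 + lam * lam)).
  { unfold pnorm. fold (sqnorm (psub a m)) (sqnorm (psub c m)). rewrite N1, N2. apply sqrt_sqrt.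
    apply Rmult_le_pos; lra. }
  unfold angle_at. rewrite DD, PP.
  replace (U * (lam * lam - / 4) / (U * (/ 4 + lam * lam))) with (cos alpha).
  - apply acos_cos. unfold th in Hth. pose proof PI_RGT_0. lra.
  - replace alpha with (PI - th) by (unfold th; ring). rewrite Rtrigo_facts.cos_pi_minus, El.
    field_simplify_eq; [| split; [lra|]; nra].
    replace (sin th ^ 2) with (1 - cos th ^ 2) by (simpl; lra). ring.
Qed.

Lemma polyline_cross_bisector a c lam x : polyline a (bisector_pt a c lam) c x ->
  exists tau, 0 <= tau <= 1 /\ cross (psub c a) (psub x a) = tau * (lam * sqnorm (psub c a)) /\
    (tau = 0 -> x = a \/ x = c).
Proof.
  pose proof (cross_bisector_pt a c lam) as BC. set (m := bisector_pt a c lam) in *.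
  intros [[t [Ht Ex]] | [t [Ht Ex]]]; [exists t | exists (1 - t)]; (split; [lra | split]).
  - rewrite <- BC, Ex. destruct a, c, m; pt_simpl; ring.
  - intros ->. left. rewrite Ex. destruct a, m; pt_simpl; f_equal; ring.
  - rewrite <- BC, Ex. destruct a, c, m; pt_simpl; ring.
  - intros Z. right. rewrite Ex. replace t with 1 by lra. destruct c, m; pt_simpl; f_equal; ring.
Qed.

Definition bend_on_side (alpha sg : R) (e : edge) : edge :=
  mkEdge (e_src e) (e_dst e)
    (polyline (e_src e) (bisector_pt (e_src e) (e_dst e) (sg * arc_height alpha)) (e_dst e)).

Lemma bend_on_side_spec alpha sg e : 0 < PI - alpha < PI / 2 -> (sg = 1 \/ sg = -1) -> e_src e <> e_dst e ->
  bend_edge alpha (bend_on_side alpha sg e) /\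
  drawn_on_side (sin (PI - alpha) / cos (PI - alpha)) sg e (bend_on_side alpha sg e).
Proof.
  intros Hth Hsg Hne. unfold bend_on_side.
  set (a := e_src e) in *. set (c := e_dst e) in *.
  assert (Hh : 0 < arc_height alpha)
    by (unfold arc_height; apply Rdiv_lt_0_compat;
        [apply sin_gt_0 | pose proof (cos_gt_0 (PI - alpha))]; lra).
  set (lam := sg * arc_height alpha). set (m := bisector_pt a c lam).
  pose proof (sqnorm_sub_pos c a (not_eq_sym Hne)) as HU.
  assert (Hs2 : sg * sg = 1) by (destruct Hsg as [-> | ->]; ring).
  pose proof (cross_bisector_pt a c lam) as BC. fold m in BC.
  assert (NZ : lam * sqnorm (psub c a) <> 0) by (unfold lam; destruct Hsg as [-> | ->]; nra).
  assert (Hncol : ~ collinear a m c).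
  { unfold collinear. intros Hc. apply NZ. rewrite <- BC.
    replace (cross (psub c a) (psub m a)) with (- cross (psub m a) (psub c a))
      by (destruct a, c, m; pt_simpl; ring). lra. }
  assert (Hang : angle_at a m c = alpha) by (apply angle_at_bend_apex; auto).
  split; [exists m; cbn; split; [auto | split; [auto | intros x; unfold polyline; tauto]]|].
  split; [auto | split; [auto | split]]; cbn [e_curve]; fold a c.
  - apply polyline_in_diamond.
    + apply Rlt_le, Rdiv_lt_0_compat; [apply sin_gt_0 | apply cos_gt_0]; lra.
    + apply (bend_apex_in_diamond alpha (mkEdge a c (polyline a m c))); auto.
  - intros x Hx. destruct (polyline_cross_bisector a c lam x Hx) as [tau [Htau [E Hend]]].
    rewrite E. split.
    + replace (sg * (tau * (lam * sqnorm (psub c a))))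
        with ((sg * sg) * tau * arc_height alpha * sqnorm (psub c a)) by (unfold lam; ring).
      rewrite Hs2. apply Rmult_le_pos; [apply Rmult_le_pos |]; lra.
    + intros Z. apply Hend. apply Rmult_integral in Z as [Z | Z]; [auto | contradiction].
Qed.

Section Redrawing.

Variables (P : list pt) (k : R).
Hypothesis Hsep : separated P k.

Lemma diamond_curves_noncrossing (e f : edge) :
  In (e_src e) P -> In (e_dst e) P -> In (e_src f) P -> In (e_dst f) P ->
  e_src e <> e_dst e -> e_src f <> e_dst f -> ~ same_endpoints e f ->
  ((e_src e <> e_src f /\ e_src e <> e_dst f /\ e_dst e <> e_src f /\ e_dst e <> e_dst f) ->
     forall y, seg (e_src e) (e_dst e) y -> ~ seg (e_src f) (e_dst f) y) ->
  (forall x, e_curve e x -> diamond k (e_src e) (e_dst e) x) ->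
  (forall x, e_curve f x -> diamond k (e_src f) (e_dst f) x) ->
  noncrossing e f.
Proof.
  intros Ha Hc Hb Hd Hac Hbd Hns Hdis De Df x Hx Hy.
  specialize (De x Hx) as [Da Dc]. specialize (Df x Hy) as [Db Dd].
  unfold same_endpoints, is_endpoint in *.
  set (a := e_src e) in *. set (c := e_dst e) in *. set (b := e_src f) in *. set (d := e_dst f) in *.
  destruct (classic (a = b)) as [<- | Nab].
  { assert (c <> d) by tauto.
    assert (x = a) by (apply (cones_meet_at_apex _ _ Hsep a c d x); auto). subst; auto. }
  destruct (classic (a = d)) as [<- | Nad].
  { assert (c <> b) by tauto.
    assert (x = a) by (apply (cones_meet_at_apex _ _ Hsep a c b x); auto). subst; auto. }
  destruct (classic (c = b)) as [<- | Ncb].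
  { assert (x = c) by (apply (cones_meet_at_apex _ _ Hsep c a d x); auto). subst; auto. }
  destruct (classic (c = d)) as [<- | Ncd].
  { assert (x = c) by (apply (cones_meet_at_apex _ _ Hsep c a b x); auto). subst; auto. }
  exfalso. apply (diamonds_apart _ _ Hsep a c b d x); auto; split; auto.
Qed.

Variables (ok : edge -> Prop) (mk : R -> edge -> edge) (G0 : list edge).
Hypothesis HG0 : embedded_graph straight_edge true P G0.
Hypothesis Hmk : forall e sg, (sg = 1 \/ sg = -1) -> e_src e <> e_dst e ->
  ok (mk sg e) /\ drawn_on_side k sg e (mk sg e).

Lemma redrawn_edge_spec e sg : In e G0 -> (sg = 1 \/ sg = -1) ->
  In (e_src (mk sg e)) P /\ In (e_dst (mk sg e)) P /\ ok (mk sg e) /\ drawn_on_side k sg e (mk sg e).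
Proof.
  intros He Hsg. apply embedded_graph_iff in HG0 as [_ [Hel _]].
  destruct (Hel e He) as [Ha [Hc [Hne _]]]. destruct (Hmk e sg Hsg Hne) as [Ok Hd].
  destruct Hd as [Es [Ed _]]. rewrite Es, Ed. auto.
Qed.

Lemma redrawn_avoids_vertices e sg v : In e G0 -> (sg = 1 \/ sg = -1) -> In v P ->
  e_curve (mk sg e) v -> is_endpoint (mk sg e) v.
Proof.
  intros He Hsg Hv Hx. apply embedded_graph_iff in HG0 as [_ [Hel _]].
  destruct (Hel e He) as [Ha [Hc [Hne _]]]. destruct (Hmk e sg Hsg Hne) as [_ [Es [Ed [Hdia _]]]].
  unfold is_endpoint. rewrite Es, Ed.
  destruct (classic (v = e_src e)); [left; auto|]. destruct (classic (v = e_dst e)); [right; auto|].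
  exfalso. apply (cone_free _ _ Hsep (e_src e) (e_dst e) v); auto. apply Hdia; auto.
Qed.

Lemma redrawn_noncrossing e f sg tau : In e G0 -> In f G0 -> (sg = 1 \/ sg = -1) -> (tau = 1 \/ tau = -1) ->
  compatible true e f -> compatible true (mk sg e) (mk tau f).
Proof.
  intros He Hf Hsg Htau [HR Hns].
  apply embedded_graph_iff in HG0 as [_ [Hel _]].
  destruct (Hel e He) as [Ha [Hc [Hne Ce]]]. destruct (Hel f Hf) as [Hb [Hd [Hnf Cf]]].
  destruct (Hmk e sg Hsg Hne) as [_ [Es [Ed [De _]]]].
  destruct (Hmk f tau Htau Hnf) as [_ [Fs [Fd [Df _]]]].
  assert (Hns' : ~ same_endpoints e f) by auto.
  split; [| intros _; unfold same_endpoints; rewrite Es, Ed, Fs, Fd; auto].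
  apply diamond_curves_noncrossing; rewrite ?Es, ?Ed, ?Fs, ?Fd; auto.
  - unfold same_endpoints. rewrite Es, Ed, Fs, Fd. auto.
  - intros [N1 [N2 [N3 N4]]] y Hy1 Hy2. apply Ce in Hy1. apply Cf in Hy2.
    destruct (HR y Hy1 Hy2) as [[X1 | X1] [X2 | X2]]; congruence.
Qed.

Lemma redrawn_opposite_sides e : In e G0 -> noncrossing (mk 1 e) (mk (-1) e).
Proof.
  intros He. apply embedded_graph_iff in HG0 as [_ [Hel _]]. destruct (Hel e He) as [_ [_ [Hne _]]].
  destruct (Hmk e 1 (or_introl eq_refl) Hne) as [_ [Es [Ed [_ Side1]]]].
  destruct (Hmk e (-1) (or_intror eq_refl) Hne) as [_ [Fs [Fd [_ Side2]]]].
  intros z Hz1 Hz2. destruct (Side1 z Hz1) as [A1 B1]. destruct (Side2 z Hz2) as [A2 _].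
  unfold is_endpoint. rewrite Es, Ed, Fs, Fd. destruct B1; [lra | auto | auto].
Qed.

Lemma redrawn_graphs_embedded :
  embedded_graph ok true P (map (mk 1) G0) /\
  embedded_graph ok false P (map (mk 1) G0 ++ map (mk (-1)) G0).
Proof.
  pose proof HG0 as HG. apply embedded_graph_iff in HG as [ND [_ [_ Hpw]]].
  assert (Hsg1 : (1 = 1 \/ 1 = -1)) by (left; auto).
  assert (Hsg2 : (-1 = 1 \/ -1 = -1)) by (right; auto).
  assert (Hcompat : forall sg tau, (sg = 1 \/ sg = -1) -> (tau = 1 \/ tau = -1) ->
    forall x y, In x G0 -> In y G0 -> compatible true x y -> compatible false (mk sg x) (mk tau y)).
  { intros sg tau Hsg Htau x y Hx Hy Hxy. split; [apply redrawn_noncrossing; auto | discriminate]. }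
  assert (Hedges : forall sg, (sg = 1 \/ sg = -1) -> forall e', In e' (map (mk sg) G0) ->
    In (e_src e') P /\ In (e_dst e') P /\ ok e').
  { intros sg Hsg e' He'. apply in_map_iff in He' as [e [<- He]].
    destruct (redrawn_edge_spec e sg He Hsg) as [? [? [? _]]]. auto. }
  assert (Hverts : forall sg, (sg = 1 \/ sg = -1) -> forall e' v, In e' (map (mk sg) G0) -> In v P ->
    e_curve e' v -> is_endpoint e' v).
  { intros sg Hsg e' v He'. apply in_map_iff in He' as [e [<- He]]. apply redrawn_avoids_vertices; auto. }
  split; apply embedded_graph_iff; split; auto; split; [| split | | split].
  - apply Hedges; auto.
  - apply Hverts; auto.
  - apply (ForallOrdPairs_map _ _ _ _ Hpw). intros x y Hx Hy Hxy. apply redrawn_noncrossing; auto.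
  - intros e' He'. apply in_app_or in He' as [He' | He']; [apply (Hedges 1) | apply (Hedges (-1))]; auto.
  - intros e' v He'. apply in_app_or in He' as [He' | He']; [apply (Hverts 1) | apply (Hverts (-1))]; auto.
  - apply ForallOrdPairs_app; [apply (ForallOrdPairs_map _ _ _ _ Hpw); auto.. |].
    intros x' y' Hx Hy. apply in_map_iff in Hx as [e [<- He]]. apply in_map_iff in Hy as [f [<- Hf]].
    split; [| discriminate].
    destruct (classic (e = f)) as [<- | Hne]; [apply redrawn_opposite_sides; auto|].
    destruct (ForallOrdPairs_In Hpw e f He Hf) as [Eef | [Hef | Hfe]]; [contradiction | |].
    + apply (redrawn_noncrossing e f 1 (-1)); auto.
    + apply (compatible_sym true), (redrawn_noncrossing f e (-1) 1); auto.
Qed.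

End Redrawing.

(** * Maximum edge counts *)

Lemma max_edges_of_lens_drawings P k m (ok : edge -> Prop) (mk : R -> edge -> edge) :
  general_position P -> separated P k -> M_is P m ->
  (forall e, ok e -> e_src e <> e_dst e /\ lens k (e_src e) (e_dst e) (e_curve e)) ->
  no_parallel_triple ok ->
  (forall e sg, (sg = 1 \/ sg = -1) -> e_src e <> e_dst e ->
     ok (mk sg e) /\ drawn_on_side k sg e (mk sg e)) ->
  is_max_edges (embedded_graph ok true P) m /\ is_max_edges (embedded_graph ok false P) (2 * m).
Proof.
  intros GP Hsep HM Hok Htr Hmk.
  pose proof HM as [[G0 [HG0 HL0]] _].
  destruct (redrawn_graphs_embedded P k Hsep ok mk G0 HG0 Hmk) as [Hsimple Hmulti].
  split; split.
  - exists (map (mk 1) G0). rewrite length_map. auto.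
  - intros G HG. apply (simple_graph_bound P k m ok GP Hsep HM Hok G HG).
  - exists (map (mk 1) G0 ++ map (mk (-1)) G0). rewrite length_app, !length_map. split; [auto | lia].
  - intros G HG. apply (multigraph_bound P k m ok GP Hsep HM Hok G Htr HG).
Qed.

Lemma arc_drawings alpha : 0 < PI - alpha < PI / 4 ->
  let k := sin (PI - alpha) / cos (PI - alpha) in
  (forall e, arc_edge alpha e -> e_src e <> e_dst e /\ lens k (e_src e) (e_dst e) (e_curve e)) /\
  no_parallel_triple (arc_edge alpha) /\
  (forall e sg, (sg = 1 \/ sg = -1) -> e_src e <> e_dst e ->
     arc_edge alpha (arc_on_side alpha sg e) /\ drawn_on_side k sg e (arc_on_side alpha sg e)).
Proof.
  intros Hth k. split; [|split].
  - intros e He. split; [apply He | apply arc_lens; auto].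
  - apply (no_parallel_triple_of_midpoints _ (arc_height alpha)).
    + assert (0 < cos (PI - alpha)) by (apply cos_gt_0; lra).
      apply Rdiv_lt_0_compat; [apply sin_gt_0 |]; lra.
    + intros e He. split; [apply He | apply arc_midpoint_on_curve; auto; lra].
  - intros e sg Hsg Hne. apply arc_on_side_spec; auto; lra.
Qed.

Lemma bend_drawings alpha : 0 < PI - alpha < PI / 2 ->
  let k := sin (PI - alpha) / cos (PI - alpha) in
  (forall e, bend_edge alpha e -> e_src e <> e_dst e /\ lens k (e_src e) (e_dst e) (e_curve e)) /\
  no_parallel_triple (bend_edge alpha) /\
  (forall e sg, (sg = 1 \/ sg = -1) -> e_src e <> e_dst e ->
     bend_edge alpha (bend_on_side alpha sg e) /\ drawn_on_side k sg e (bend_on_side alpha sg e)).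
Proof.
  intros Hth k. split; [|split].
  - intros e He. split; [| apply bend_lens; auto].
    destruct He as [m [Hn _]]. apply (not_collinear_neq _ m _ Hn).
  - apply bend_no_parallel_triple; auto.
  - intros e sg Hsg Hne. apply bend_on_side_spec; auto.
Qed.

Lemma near_straight_angles kap : 0 < kap ->
  exists alpha0, 0 < alpha0 < PI /\ forall alpha, alpha0 < alpha < PI ->
    0 < PI - alpha < PI / 4 /\ 0 < sin (PI - alpha) / cos (PI - alpha) <= kap.
Proof.
  intros Hk. pose proof PI_RGT_0.
  assert (Hat : 0 < atan kap < PI / 2) by (rewrite <- atan_0; split; [apply atan_increasing; auto |];
    pose proof (atan_bound kap); lra).
  set (th0 := Rmin (PI / 4) (atan kap)).
  assert (Hth0 : 0 < th0 <= PI / 4 /\ th0 <= atan kap)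
    by (unfold th0; split; [split; [apply Rmin_case |] | ]; [lra | lra | apply Rmin_l | apply Rmin_r]).
  exists (PI - th0). split; [lra|]. intros alpha Ha.
  split; [lra|].
  change (0 < tan (PI - alpha) <= kap). split; [apply tan_gt_0; lra|].
  rewrite <- (tan_atan kap). left. apply tan_increasing; lra.
Qed.

Theorem proposition4 :
  forall P : list pt, NoDup P -> general_position P ->
  exists alpha0 : R, 0 < alpha0 < PI /\
    forall alpha : R, alpha0 < alpha < PI ->
    forall m : nat, M_is P m ->
      Ma_is P alpha m /\ Mb_is P alpha m /\
      Ma_multi_is P alpha (2 * m) /\ Mb_multi_is P alpha (2 * m).
Proof.
  (* [NoDup P] also follows from [M_is P m]. *)
  intros P _ GP.
  destruct (separated_for_small_k P GP) as [kap [Hkap Hsep]].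
  destruct (near_straight_angles kap Hkap) as [alpha0 [H0 Hangle]].
  exists alpha0. split; [exact H0|]. intros alpha Halpha m HM.
  destruct (Hangle alpha Halpha) as [Hth Hk].
  specialize (Hsep _ Hk).
  destruct (arc_drawings alpha Hth) as [Aok [Atr Amk]].
  destruct (bend_drawings alpha ltac:(lra)) as [Bok [Btr Bmk]].
  destruct (max_edges_of_lens_drawings P _ m _ _ GP Hsep HM Aok Atr Amk) as [Ma Ma2].
  destruct (max_edges_of_lens_drawings P _ m _ _ GP Hsep HM Bok Btr Bmk) as [Mb Mb2].
  unfold Ma_is, Mb_is, Ma_multi_is, Mb_multi_is. auto.
Qed.
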